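(* Let $a,b,c\geq 1$ be integers, put $v=a+b+c+1$ and $L=\{1^a,2^b,8^c\}$, and suppose $8\leq\lfloor v/2\rfloor$. Then there exists a Hamiltonian path $H$ of $K_v$ with $\ell(H)=L$ if and only if for every divisor $d$ of $v$, the number of elements of $L$ (with multiplicity) that are multiples of $d$ does not exceed $v-d$.
   Context: $K_v$ is the complete graph on $\{0,1,\dots,v-1\}$. The length of an edge $[x,y]$ is $\ell(x,y)=\min(|x-y|,\,v-|x-y|)$, and for a subgraph $\Gamma$, $\ell(\Gamma)$ is the multiset of lengths of its edges. $\{1^a,2^b,8^c\}$ is the multiset with $a$ copies of $1$, $b$ copies of $2$, $c$ copies of $8$. (The paper phrases this as ''$\mathrm{BHR}(\{1^a,2^b,8^c\})$ holds''.) *)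

From mathcomp Require Import all_boot.
Set Implicit Arguments. Unset Strict Implicit. Unset Printing Implicit Defensive.

Definition absdiff (x y : nat) : nat := if x <= y then y - x else x - y.

Definition ell (v x y : nat) : nat := minn (absdiff x y) (v - absdiff x y).

(* A Hamiltonian path of K_v, given as the sequence of its vertices in order:
   every vertex 0..v-1 occurs exactly once. *)
Definition ham_path (v : nat) (h : seq nat) : Prop := perm_eq h (iota 0 v).

Definition path_lengths (v : nat) (h : seq nat) : seq nat :=
  [seq ell v e.1 e.2 | e <- zip h (behead h)].

Definition L128 (a b c : nat) : seq nat := nseq a 1 ++ nseq b 2 ++ nseq c 8.

From mathcomp Require Import all_boot zify.
Set Implicit Arguments. Unset Strict Implicit. Unset Printing Implicit Defensive.

(* If d divides v, an edge of K_v whose length is a multiple of d joins two vertices of the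
   same residue class mod d, while a Hamiltonian path visits all d classes: at least d - 1 of
   its v - 1 edges change class, so at most v - d lengths are multiples of d.
   Conversely, for L = {1^a, 2^b, 8^c} only d = 4 and d = 8 matter, and they ask for a + b >= 3
   when 4 | v and a + b >= 7 when 8 | v. Paths are then grown from finitely many base paths,
   checked by computation. The growth step inserts k new vertices at a "k-cut" p of a path:
   each of the k edges of length k crossing p is subdivided at a new vertex, every other
   length is preserved, and a k-cut reappears at p + k, so the step can be repeated. Each base
   path carries cuts of kind 1, 2 or 8 as needed to reach every admissible (a, b, c). *)

Definition path_edges (T : Type) (h : seq T) : seq (T * T) := zip h (behead h).

Lemma path_lengthsE v h :
  path_lengths v h = [seq ell v e.1 e.2 | e <- path_edges h].
Proof. by []. Qed.

Lemma size_path_edges (T : Type) (h : seq T) : size (path_edges h) = (size h).-1.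
Proof. by rewrite /path_edges size_zip size_behead; case: (size h) => //= n; lia. Qed.

Lemma path_edges_map (T U : Type) (f : T -> U) (h : seq T) :
  path_edges (map f h) = [seq (f e.1, f e.2) | e <- path_edges h].
Proof. by rewrite /path_edges; elim: h => [|x [|y h] IH] //=; rewrite -IH. Qed.

Lemma all_path_edges (T : Type) (P : pred T) (h : seq T) :
  all P h -> all (fun e => P e.1 && P e.2) (path_edges h).
Proof.
rewrite /path_edges; elim: h => [|x [|y h] IH] //= /andP[-> hyh].
by rewrite (IH hyh); case/andP: hyh => ->.
Qed.

Lemma all_flatten (T : Type) (P : pred T) (ss : seq (seq T)) :
  all P (flatten ss) = all (all P) ss.
Proof. by elim: ss => //= s ss IH; rewrite all_cat IH. Qed.

Lemma flatten_filter1 (T U : Type) (P : pred T) (f : T -> U) (s : seq T) :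
  flatten [seq if P x then [:: f x] else [::] | x <- s] = [seq f x | x <- s & P x].
Proof. by elim: s => //= x s IH; case: (P x); rewrite /= IH. Qed.

Lemma flatten_map_filter (T U : Type) (P : pred T) (F : T -> seq U) (s : seq T) :
  (forall x, ~~ P x -> F x = [::]) -> flatten [seq F x | x <- s & P x] = flatten (map F s).
Proof. by move=> F0; elim: s => //= x s IH; case: ifP => Px; rewrite /= IH // F0 ?Px. Qed.

Lemma perm_flatten_doubled (T : Type) (s : seq T) (D : pred T) (g : T -> nat) k :
  (forall x, D x -> g x = k) ->
  perm_eq (flatten [seq if D x then [:: k; k] else [:: g x] | x <- s])
          (map g s ++ nseq (count D s) k).
Proof.
move=> gD; apply/permP => P; elim: s => //= x s IH.
case: ifP => Dx; last by move: IH; rewrite !count_cat !count_nseq /=; lia.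
by move: IH; rewrite !count_cat !count_nseq gD //=; lia.
Qed.

Lemma sub_in_count (T : eqType) (a1 a2 : pred T) (s : seq T) :
  {in s, forall x, a1 x -> a2 x} -> count a1 s <= count a2 s.
Proof.
elim: s => //= x s IH sub; apply: leq_add.
  by case: (boolP (a1 x)) => // /(sub x (mem_head x s)) ->.
by apply: IH => y ys; apply: sub; rewrite inE ys orbT.
Qed.

Lemma size_undup_le_changes (T : eqType) (s : seq T) :
  size (undup s) <= (count (fun e => e.1 != e.2) (path_edges s)).+1.
Proof.
elim: s => [|x [|y s] IH] //=; move: IH => /=.
case: (eqVneq x y) => [-> | _]; first by rewrite mem_head.
by case: (x \in y :: s) => /=; rewrite /path_edges /=; lia.
Qed.

Lemma ell_dvd_eqmod v d x y :
  x < v -> y < v -> d %| v -> d %| ell v x y -> x = y %[mod d].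
Proof.
move=> xv yv dv.
have key u w : u <= w -> w < v -> d %| minn (w - u) (v - (w - u)) -> u = w %[mod d].
  move=> le_uw wv; rewrite /minn; case: ltnP => _ hd; apply/eqP; rewrite eq_sym eqn_mod_dvd //.
  by move: (dvdn_sub dv hd); rewrite subKn //; lia.
rewrite /ell /absdiff; case: leqP => [le_xy /key | /ltnW le_yx /key]; first exact.
by move=> /(_ le_yx xv).
Qed.

Lemma count_dvd_path_lengths v h d :
  ham_path v h -> d %| v -> count (fun l => d %| l) (path_lengths v h) <= v - d.
Proof.
move=> hp dv; have sz_h : size h = v by rewrite (perm_size hp) size_iota.
have [v0|v_gt0] := posnP v; first by move: sz_h; rewrite v0 => /size0nil ->.
have d_gt0 : 0 < d by apply: contraTT dv; rewrite -eqn0Ngt => /eqP->; rewrite dvd0n -lt0n.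
set E := path_edges h.
pose same e := e.1 %% d == e.2 %% d.
have lt_v : all (fun e => (e.1 < v) && (e.2 < v)) E.
  by apply: (@all_path_edges _ (fun x => x < v)); apply/allP => x; rewrite (perm_mem hp) mem_iota.
have le_same : count (fun l => d %| l) (path_lengths v h) <= count same E.
  rewrite path_lengthsE count_map; apply: sub_in_count => e /(allP lt_v) /andP[xv yv] /= hd.
  by apply/eqP; apply: ell_dvd_eqmod hd.
have classes : d <= size (undup (map (modn^~ d) h)).
  rewrite -[X in X <= _](size_iota 0 d); apply: uniq_leq_size; first exact: iota_uniq.
  move=> i; rewrite mem_iota add0n mem_undup => /andP[_ i_lt].
  apply/mapP; exists i; last by rewrite /= modn_small.
  by rewrite (perm_mem hp) mem_iota; move: (dvdn_leq v_gt0 dv); lia.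
have := size_undup_le_changes (map (modn^~ d) h).
rewrite path_edges_map count_map (@eq_count _ _ (predC same)) //.
by have := count_predC same E; rewrite size_path_edges sz_h -/E; lia.
Qed.

Definition edge_diff (e : nat * nat) := absdiff e.1 e.2.
Definition edge_max (e : nat * nat) := maxn e.1 e.2.
Definition straddles p (e : nat * nat) := minn e.1 e.2 < p <= maxn e.1 e.2.
Definition cut_edge p k e := straddles p e && (edge_diff e == k).
(* An edge straddling p that is not a cut edge must wrap around: its length v - diff is
   unchanged when k vertices are inserted at p. *)
Definition short_edge M v p k e :=
  if straddles p e then (edge_diff e == k) || (v - edge_diff e <= M) else edge_diff e <= M.
Definition shift p k z := if z < p then z else z + k.
Definition split_edge p k (e : nat * nat) : seq (nat * nat) :=
  if cut_edge p k e then [:: (shift p k e.1, edge_max e); (edge_max e, shift p k e.2)]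
  else [:: (shift p k e.1, shift p k e.2)].

Ltac split_innermost b :=
  lazymatch b with context [if _ then _ else _] => fail | _ => destruct b eqn:? end.

Ltac case_lia :=
  intros; unfold split_edge, short_edge, cut_edge, straddles, edge_max, edge_diff,
    ell, absdiff, shift in *; simpl in *;
  repeat match goal with
  | |- context [if ?b then _ else _] => split_innermost b; simpl in *; try lia
  | H : context [if ?b then _ else _] |- _ => split_innermost b; simpl in *; try lia
  end; repeat congr (_ :: _); done || lia.

Lemma split_edge_lengths M v p k e : 2 * M < v -> 0 < k <= M -> short_edge M v p k e ->
  [seq ell (v + k) f.1 f.2 | f <- split_edge p k e] =
  if cut_edge p k e then [:: k; k] else [:: ell v e.1 e.2].
Proof. by case: e => x y; case_lia. Qed.

Lemma split_edge_short_shift M v p k e : 2 * M < v -> 0 < k <= M -> short_edge M v p k e ->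
  all (short_edge M (v + k) (p + k) k) (split_edge p k e).
Proof. by case: e => x y; case_lia. Qed.

Lemma split_edge_cut_shift M v p k e : 2 * M < v -> 0 < k <= M -> short_edge M v p k e ->
  [seq edge_max f | f <- split_edge p k e & cut_edge (p + k) k f] =
  if cut_edge p k e then [:: edge_max e + k] else [::].
Proof. by case: e => x y; case_lia. Qed.

Lemma split_edge_short_below M v p k q kq e : 2 * M < v -> 0 < k <= M -> 0 < kq <= M ->
  q + maxn kq k <= p -> short_edge M v p k e -> short_edge M v q kq e ->
  all (short_edge M (v + k) q kq) (split_edge p k e).
Proof. by case: e => x y; case_lia. Qed.

Lemma split_edge_cut_below M v p k q kq e : 2 * M < v -> 0 < k <= M -> 0 < kq <= M ->
  q + maxn kq k <= p -> short_edge M v p k e -> short_edge M v q kq e ->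
  [seq edge_max f | f <- split_edge p k e & cut_edge q kq f] =
  if cut_edge q kq e then [:: edge_max e] else [::].
Proof. by case: e => x y; case_lia. Qed.

(* The upper ends of the k cut edges are p, ..., p + k - 1: these become the new vertices. *)
Definition is_cut M v h p k :=
  [&& 2 * M < v, 0 < k <= M, p + k <= v, all (short_edge M v p k) (path_edges h) &
      perm_eq [seq edge_max e | e <- path_edges h & cut_edge p k e] (iota p k)].

(* Vertices z >= p move to z + k, and each cut edge {x, y} with x < p <= y becomes the path
   x, y, y + k, in which y is now a new vertex. *)
Definition expand p k (h : seq nat) : seq nat :=
  if h is x :: _ then
    shift p k x :: flatten [seq map snd (split_edge p k e) | e <- path_edges h]
  else [::].

Lemma path_edges_expand p k h :
  path_edges (expand p k h) = flatten (map (split_edge p k) (path_edges h)).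
Proof.
case: h => [|x t] //=; elim: t x => [|y t IH] x //=.
move: (IH y); rewrite /path_edges /= /split_edge; case: ifP => _ /= <- //.
Qed.

Lemma perm_expand p k h :
  perm_eq (expand p k h)
    (map (shift p k) h ++ [seq edge_max e | e <- path_edges h & cut_edge p k e]).
Proof.
case: h => [|x t] //=; rewrite perm_cons; elim: t x => [|y t IH] x //=.
move: (IH y); rewrite /path_edges /= /split_edge; case: ifP => _ /=; last by rewrite perm_cons.
by move=> /permP H; apply/permP => P; move: (H P); rewrite /= !count_cat /=; lia.
Qed.

Lemma map_shift_iota p k v : p <= v ->
  map (shift p k) (iota 0 v) = iota 0 p ++ iota (p + k) (v - p).
Proof.
move=> le_pv; rewrite -{1}(subnKC le_pv) iotaD map_cat add0n; congr (_ ++ _).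
  by apply: map_id_in => z; rewrite mem_iota /shift add0n => /andP[_ ->].
rewrite [in RHS]addnC iotaDl; apply/eq_in_map => z; rewrite mem_iota /shift.
by move=> /andP[le_pz _]; rewrite ltnNge le_pz addnC.
Qed.

Lemma count_cut_edges M v h p k : is_cut M v h p k -> count (cut_edge p k) (path_edges h) = k.
Proof. by case/and5P=> _ _ _ _ /perm_size; rewrite size_map size_filter size_iota. Qed.

Lemma ham_path_expand M v h p k :
  ham_path v h -> is_cut M v h p k -> ham_path (v + k) (expand p k h).
Proof.
move=> hp /and5P[_ _ le_pkv _ cut_max].
apply: perm_trans (perm_expand p k h) _.
have -> : iota 0 (v + k) = iota 0 p ++ iota p k ++ iota (p + k) (v - p).
  by rewrite -!iotaD; congr iota; lia.
apply: (@perm_trans _ ((iota 0 p ++ iota (p + k) (v - p)) ++ iota p k)).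
  by rewrite -map_shift_iota; [apply: perm_cat; first exact: perm_map | lia].
by rewrite -catA perm_cat2l perm_catC.
Qed.

Lemma path_lengths_expand M v h p k : is_cut M v h p k ->
  perm_eq (path_lengths (v + k) (expand p k h)) (path_lengths v h ++ nseq k k).
Proof.
move=> /[dup] cut /and5P[hv hk _ short _].
rewrite !path_lengthsE path_edges_expand map_flatten -map_comp.
have -> : [seq [seq ell (v + k) f.1 f.2 | f <- split_edge p k e] | e <- path_edges h] =
          [seq if cut_edge p k e then [:: k; k] else [:: ell v e.1 e.2] | e <- path_edges h].
  by apply/eq_in_map => e /(allP short) he; rewrite /= (split_edge_lengths hv hk he).
apply: perm_trans (perm_flatten_doubled _ _) _ => [[x y] /= | ].
  by rewrite /cut_edge /edge_diff /ell /= => /andP[_ /eqP]; lia.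
by rewrite (count_cut_edges cut).
Qed.

Lemma is_cut_expand M v h p k :
  is_cut M v h p k -> is_cut M (v + k) (expand p k h) (p + k) k.
Proof.
move=> /and5P[hv hk le_pkv short cut_max]; apply/and5P; split; try lia.
  rewrite path_edges_expand all_flatten all_map; apply/allP => e he.
  exact: split_edge_short_shift (allP short e he).
rewrite path_edges_expand filter_flatten map_flatten -!map_comp.
have -> : [seq [seq edge_max f | f <- split_edge p k e & cut_edge (p + k) k f]
            | e <- path_edges h] =
          [seq if cut_edge p k e then [:: edge_max e + k] else [::] | e <- path_edges h].
  by apply/eq_in_map => e /(allP short) he; rewrite /= (split_edge_cut_shift hv hk he).
rewrite flatten_filter1 addnC iotaDl.
under eq_map => e do rewrite addnC.
by rewrite map_comp perm_map.
Qed.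

Lemma is_cut_expand_below M v h p k q kq :
  is_cut M v h p k -> is_cut M v h q kq -> q + maxn kq k <= p ->
  is_cut M (v + k) (expand p k h) q kq.
Proof.
move=> /and5P[hv hk _ short _] /and5P[_ hkq le_qkv short_q cut_max] le_qp.
apply/and5P; split; try lia.
  rewrite path_edges_expand all_flatten all_map; apply/allP => e he.
  exact: split_edge_short_below (allP short e he) (allP short_q e he).
rewrite path_edges_expand filter_flatten map_flatten -!map_comp.
have -> : [seq [seq edge_max f | f <- split_edge p k e & cut_edge q kq f]
            | e <- path_edges h] =
          [seq if cut_edge q kq e then [:: edge_max e] else [::] | e <- path_edges h].
  apply/eq_in_map => e he /=.
  by rewrite (split_edge_cut_below hv hk hkq le_qp (allP short e he) (allP short_q e he)).
by rewrite flatten_filter1.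
Qed.

Lemma expand_iter M v h p k n (cs : seq (nat * nat)) :
  ham_path v h -> is_cut M v h p k ->
  all (fun c => is_cut M v h c.1 c.2 && (c.1 + maxn c.2 k <= p)) cs ->
  exists h', [/\ ham_path (v + n * k) h',
    perm_eq (path_lengths (v + n * k) h') (path_lengths v h ++ nseq (n * k) k) &
    all (fun c => is_cut M (v + n * k) h' c.1 c.2) cs].
Proof.
elim: n v h p => [|n IH] v h p hp cut below.
  exists h; rewrite addn0 cats0; split => //.
  by apply/allP => c /(allP below) /andP[].
have below' :
    all (fun c => is_cut M (v + k) (expand p k h) c.1 c.2 && (c.1 + maxn c.2 k <= p + k)) cs.
  apply/allP => c /(allP below) /andP[cut_c le_cp].
  by rewrite (is_cut_expand_below cut cut_c le_cp) /=; lia.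
have [h' [hp' lengths' cuts']] :=
  IH _ _ _ (ham_path_expand hp cut) (is_cut_expand cut) below'.
exists h'; rewrite mulSn addnA; split => //.
by rewrite (perm_trans lengths') // nseqD catA perm_cat2r (path_lengths_expand cut).
Qed.

Definition separated_cuts (cs : seq (nat * nat)) :=
  pairwise (fun c c' => c'.1 + maxn c'.2 c.2 <= c.1) cs.

Lemma expand_separated_cuts M v h (cs : seq (nat * nat)) (g : nat * nat -> nat)
    (added := flatten [seq nseq (g c * c.2) c.2 | c <- cs]) :
  ham_path v h -> all (fun c => is_cut M v h c.1 c.2) cs -> separated_cuts cs ->
  exists h', ham_path (v + size added) h' /\
    perm_eq (path_lengths (v + size added) h') (path_lengths v h ++ added).
Proof.
rewrite {}/added; elim: cs v h => [|[p k] cs IH] v h hp; first by exists h; rewrite addn0 cats0.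
move=> /= /andP[cut cuts] /andP[below sep].
have below' : all (fun c => is_cut M v h c.1 c.2 && (c.1 + maxn c.2 k <= p)) cs.
  by apply/allP => c hc; rewrite (allP cuts c hc) (allP below c hc).
have [h1 [hp1 lengths1 cuts1]] := expand_iter (g (p, k)) hp cut below'.
have [h' [hp' lengths']] := IH _ _ hp1 cuts1 sep.
exists h'; rewrite size_cat size_nseq addnA; split => //.
by rewrite (perm_trans lengths') // catA perm_cat2r.
Qed.

(* Entry (a, b, c) holds a Hamiltonian path of K_(a+b+c+1) with lengths L128 a b c, together
   with its cuts (position, kind); base_table_ok below checks every entry of the base region. *)
Definition base_table : seq ((nat * nat * nat) * (seq nat * seq (nat * nat))) := [::
  ((1, 1, 14), ([:: 2; 11; 10; 1; 9; 0; 8; 16; 7; 15; 6; 14; 5; 3; 12; 4; 13], [::]));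
  ((1, 1, 15), ([:: 4; 14; 6; 16; 8; 0; 10; 12; 2; 1; 9; 17; 7; 15; 5; 13; 3; 11], [::]));
  ((1, 1, 16), ([:: 18; 7; 15; 16; 5; 13; 2; 10; 8; 0; 11; 3; 14; 6; 17; 9; 1; 12; 4], [::]));
  ((1, 1, 18), ([:: 1; 9; 17; 4; 12; 14; 6; 19; 20; 7; 15; 2; 10; 18; 5; 13; 0; 8; 16; 3; 11], [:: (8, 8)]));
  ((1, 1, 19), ([:: 4; 12; 20; 6; 14; 0; 8; 16; 2; 10; 18; 19; 11; 3; 17; 9; 1; 15; 7; 5; 13; 21], [:: (9, 8)]));
  ((1, 1, 20), ([:: 1; 9; 17; 2; 3; 11; 19; 4; 12; 20; 5; 13; 21; 6; 14; 22; 7; 15; 0; 8; 16; 18; 10], [:: (13, 8)]));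
  ((1, 1, 22), ([:: 0; 17; 9; 1; 2; 19; 11; 3; 20; 12; 4; 21; 13; 5; 22; 14; 6; 23; 15; 7; 24; 16; 8; 10; 18], [:: (13, 8)]));
  ((1, 1, 23), ([:: 20; 2; 10; 18; 0; 8; 16; 24; 6; 14; 22; 4; 12; 13; 5; 23; 15; 7; 25; 17; 9; 1; 19; 21; 3; 11], [:: (11, 8)]));
  ((1, 1, 24), ([:: 21; 13; 5; 24; 22; 14; 6; 25; 17; 9; 1; 20; 12; 4; 23; 15; 7; 26; 18; 10; 2; 3; 11; 19; 0; 8; 16], [:: (13, 8)]));
  ((1, 2, 13), ([:: 0; 16; 8; 10; 2; 11; 3; 12; 4; 13; 5; 14; 6; 15; 7; 9; 1], [::]));
  ((1, 2, 14), ([:: 2; 0; 10; 12; 4; 14; 6; 16; 8; 7; 15; 5; 13; 3; 11; 1; 9; 17], [::]));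
  ((1, 2, 15), ([:: 15; 4; 3; 11; 0; 8; 16; 5; 13; 2; 10; 18; 7; 9; 1; 12; 14; 6; 17], [::]));
  ((1, 2, 16), ([:: 8; 0; 12; 4; 16; 18; 6; 14; 2; 10; 11; 3; 15; 7; 19; 17; 9; 1; 13; 5], [::]));
  ((1, 2, 17), ([:: 20; 18; 10; 2; 15; 7; 5; 13; 0; 8; 16; 3; 11; 12; 4; 17; 9; 1; 14; 6; 19], [:: (8, 8)]));
  ((1, 2, 18), ([:: 7; 15; 13; 5; 19; 11; 3; 17; 9; 1; 21; 20; 6; 14; 0; 8; 16; 2; 10; 18; 4; 12], [:: (11, 8)]));
  ((1, 2, 19), ([:: 6; 14; 12; 4; 19; 11; 3; 18; 10; 2; 17; 9; 1; 16; 8; 0; 15; 7; 22; 20; 21; 13; 5], [:: (11, 8)]));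
  ((1, 2, 21), ([:: 19; 2; 0; 17; 9; 1; 18; 10; 8; 16; 24; 7; 15; 23; 6; 14; 22; 5; 13; 21; 4; 12; 11; 3; 20], [:: (11, 8)]));
  ((1, 2, 22), ([:: 3; 11; 19; 17; 9; 1; 25; 7; 15; 23; 5; 13; 21; 20; 2; 10; 18; 0; 8; 16; 24; 6; 14; 22; 4; 12], [:: (11, 8)]));
  ((1, 2, 23), ([:: 12; 4; 2; 10; 18; 26; 7; 15; 23; 25; 6; 14; 22; 3; 11; 19; 0; 8; 16; 24; 5; 13; 21; 20; 1; 9; 17], [:: (10, 8)]));
  ((1, 2, 24), ([:: 14; 6; 26; 18; 10; 2; 22; 20; 12; 4; 24; 16; 8; 0; 27; 7; 15; 23; 3; 11; 19; 21; 1; 9; 17; 25; 5; 13], [:: (11, 8)]));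
  ((1, 3, 12), ([:: 7; 15; 14; 6; 4; 12; 3; 5; 13; 11; 2; 10; 1; 9; 0; 8; 16], [::]));
  ((1, 3, 13), ([:: 11; 1; 3; 5; 13; 15; 7; 17; 9; 8; 16; 6; 14; 4; 12; 2; 10; 0], [::]));
  ((1, 3, 14), ([:: 13; 2; 4; 15; 17; 6; 14; 3; 11; 0; 8; 16; 5; 7; 18; 10; 9; 1; 12], [::]));
  ((1, 3, 15), ([:: 3; 1; 9; 17; 5; 13; 15; 7; 19; 11; 10; 2; 14; 6; 18; 0; 12; 4; 16; 8], [::]));
  ((1, 3, 16), ([:: 3; 11; 13; 5; 7; 15; 2; 10; 18; 16; 8; 0; 20; 12; 4; 17; 9; 1; 14; 6; 19], [::]));
  ((1, 3, 17), ([:: 19; 11; 3; 5; 13; 21; 7; 15; 17; 9; 1; 0; 8; 16; 2; 10; 18; 4; 12; 14; 6; 20], [:: (10, 8)]));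
  ((1, 3, 18), ([:: 16; 8; 6; 14; 15; 7; 22; 1; 9; 17; 2; 10; 18; 3; 11; 19; 4; 12; 20; 5; 13; 21; 0], [:: (12, 8)]));
  ((1, 3, 20), ([:: 13; 5; 3; 11; 10; 2; 19; 21; 4; 12; 20; 18; 1; 9; 17; 0; 8; 16; 24; 7; 15; 23; 6; 14; 22], [:: (8, 8)]));
  ((1, 3, 21), ([:: 24; 16; 8; 10; 18; 0; 2; 20; 12; 4; 6; 14; 22; 21; 3; 11; 19; 1; 9; 17; 25; 7; 15; 23; 5; 13], [:: (11, 8)]));
  ((1, 3, 22), ([:: 21; 19; 18; 10; 2; 0; 8; 16; 24; 5; 13; 11; 3; 22; 14; 6; 25; 17; 9; 1; 20; 12; 4; 23; 15; 7; 26], [:: (11, 8)]));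
  ((1, 3, 23), ([:: 1; 3; 11; 19; 27; 7; 15; 23; 21; 13; 5; 25; 17; 9; 8; 16; 24; 4; 12; 20; 0; 26; 18; 10; 2; 22; 14; 6], [:: (14, 8)]));
  ((1, 3, 24), ([:: 28; 26; 25; 17; 9; 1; 22; 14; 6; 27; 19; 11; 3; 24; 16; 8; 0; 21; 13; 5; 7; 15; 23; 2; 10; 18; 20; 12; 4], [:: (11, 8)]));
  ((1, 4, 11), ([:: 13; 4; 6; 14; 12; 3; 5; 7; 15; 16; 8; 0; 9; 1; 10; 2; 11], [::]));
  ((1, 4, 12), ([:: 2; 4; 6; 14; 16; 8; 0; 10; 12; 13; 3; 11; 1; 9; 17; 7; 15; 5], [::]));
  ((1, 4, 13), ([:: 8; 0; 2; 1; 9; 17; 6; 14; 3; 11; 13; 5; 16; 18; 10; 12; 4; 15; 7], [::]));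
  ((1, 4, 14), ([:: 4; 12; 0; 8; 6; 18; 10; 2; 14; 16; 15; 17; 9; 1; 13; 5; 3; 11; 19; 7], [::]));
  ((1, 4, 15), ([:: 6; 19; 18; 5; 13; 0; 8; 10; 2; 4; 12; 20; 7; 15; 17; 9; 1; 14; 16; 3; 11], [::]));
  ((1, 4, 16), ([:: 2; 0; 14; 12; 20; 6; 4; 18; 10; 8; 16; 17; 9; 1; 15; 7; 21; 13; 5; 19; 11; 3], [::]));
  ((1, 4, 17), ([:: 22; 20; 12; 10; 18; 3; 11; 19; 4; 2; 17; 9; 1; 16; 8; 0; 15; 7; 5; 13; 14; 6; 21], [:: (13, 8)]));
  ((1, 4, 19), ([:: 20; 18; 10; 2; 19; 11; 3; 1; 24; 16; 8; 0; 17; 9; 7; 15; 23; 6; 14; 22; 5; 13; 12; 4; 21], [:: (12, 8)]));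
  ((1, 4, 20), ([:: 7; 15; 13; 5; 3; 11; 19; 1; 9; 17; 25; 23; 21; 22; 4; 12; 20; 2; 10; 18; 0; 8; 16; 24; 6; 14], [:: (8, 8)]));
  ((1, 4, 21), ([:: 26; 25; 6; 14; 22; 24; 5; 13; 21; 2; 10; 18; 16; 8; 0; 19; 11; 3; 1; 20; 12; 4; 23; 15; 7; 9; 17], [:: (13, 8)]));
  ((1, 4, 22), ([:: 14; 6; 4; 12; 20; 0; 8; 16; 24; 22; 2; 10; 18; 26; 25; 23; 3; 11; 19; 27; 7; 15; 17; 9; 1; 21; 13; 5], [:: (8, 8)]));
  ((1, 4, 23), ([:: 22; 24; 3; 11; 19; 27; 6; 14; 16; 8; 0; 2; 10; 18; 26; 5; 13; 21; 20; 12; 4; 25; 17; 9; 1; 28; 7; 15; 23], [:: (11, 8)]));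
  ((1, 4, 24), ([:: 26; 18; 10; 2; 4; 12; 20; 28; 0; 22; 24; 16; 8; 6; 14; 13; 5; 27; 19; 11; 3; 25; 17; 9; 1; 23; 15; 7; 29; 21], [:: (12, 8)]));
  ((1, 5, 10), ([:: 8; 6; 14; 16; 15; 0; 9; 7; 5; 13; 4; 12; 3; 11; 2; 10; 1], [::]));
  ((1, 5, 11), ([:: 5; 3; 1; 11; 13; 15; 7; 9; 17; 0; 8; 16; 6; 14; 4; 12; 2; 10], [::]));
  ((1, 5, 12), ([:: 18; 10; 11; 9; 17; 0; 2; 13; 5; 16; 8; 6; 14; 3; 1; 12; 4; 15; 7], [::]));
  ((1, 5, 13), ([:: 1; 13; 11; 9; 17; 19; 7; 15; 3; 5; 6; 14; 2; 10; 18; 0; 8; 16; 4; 12], [::]));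
  ((1, 5, 14), ([:: 20; 7; 5; 6; 14; 1; 9; 17; 19; 11; 3; 16; 8; 0; 13; 15; 2; 4; 12; 10; 18], [::]));
  ((1, 5, 15), ([:: 20; 18; 16; 8; 6; 14; 0; 2; 10; 12; 4; 3; 17; 9; 1; 15; 7; 21; 13; 5; 19; 11], [::]));
  ((1, 5, 16), ([:: 7; 22; 20; 21; 13; 5; 3; 18; 10; 2; 17; 15; 0; 8; 16; 1; 9; 11; 19; 4; 12; 14; 6], [::]));
  ((1, 5, 18), ([:: 13; 5; 22; 21; 19; 17; 0; 8; 16; 24; 7; 15; 23; 6; 14; 12; 4; 2; 10; 18; 1; 9; 11; 3; 20], [:: (9, 8)]));
  ((1, 5, 19), ([:: 25; 7; 15; 13; 5; 23; 21; 19; 11; 3; 1; 9; 17; 18; 10; 2; 0; 8; 16; 24; 6; 14; 22; 4; 12; 20], [:: (8, 8)]));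
  ((1, 5, 20), ([:: 12; 4; 2; 21; 19; 0; 8; 16; 14; 6; 25; 17; 9; 1; 20; 22; 3; 11; 13; 5; 24; 23; 15; 7; 26; 18; 10], [:: (11, 8)]));
  ((1, 5, 21), ([:: 9; 17; 25; 27; 19; 11; 3; 1; 21; 13; 5; 7; 15; 23; 22; 20; 12; 4; 24; 16; 8; 0; 2; 10; 18; 26; 6; 14], [:: (14, 8)]));
  ((1, 5, 22), ([:: 2; 10; 18; 16; 8; 0; 21; 13; 11; 19; 27; 6; 14; 22; 20; 12; 4; 25; 17; 9; 1; 28; 7; 15; 23; 24; 3; 5; 26], [:: (14, 8)]));
  ((1, 5, 23), ([:: 11; 3; 25; 23; 21; 13; 5; 27; 19; 17; 15; 7; 29; 1; 9; 10; 2; 24; 16; 8; 0; 22; 14; 6; 28; 20; 12; 4; 26; 18], [:: (8, 8)]));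
  ((1, 5, 24), ([:: 8; 16; 17; 9; 1; 24; 26; 3; 11; 19; 27; 25; 2; 10; 18; 20; 28; 5; 13; 21; 29; 0; 23; 15; 7; 30; 22; 14; 6; 4; 12], [:: (10, 8)]));
  ((2, 1, 13), ([:: 13; 11; 3; 12; 4; 5; 14; 6; 15; 7; 16; 8; 0; 9; 1; 2; 10], [::]));
  ((2, 1, 14), ([:: 2; 12; 10; 0; 1; 11; 3; 13; 5; 15; 7; 17; 9; 8; 16; 6; 14; 4], [::]));
  ((2, 1, 15), ([:: 10; 9; 1; 12; 4; 15; 7; 18; 17; 6; 14; 3; 11; 0; 2; 13; 5; 16; 8], [::]));
  ((2, 1, 16), ([:: 14; 6; 18; 10; 2; 1; 9; 17; 5; 13; 11; 19; 7; 15; 3; 4; 12; 0; 8; 16], [::]));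
  ((2, 1, 17), ([:: 0; 20; 7; 15; 2; 10; 18; 5; 13; 12; 4; 17; 9; 1; 14; 6; 8; 16; 3; 11; 19], [:: (12, 8)]));
  ((2, 1, 18), ([:: 20; 12; 4; 2; 10; 18; 19; 11; 3; 17; 9; 1; 15; 7; 21; 13; 5; 6; 14; 0; 8; 16], [:: (9, 8)]));
  ((2, 1, 19), ([:: 18; 17; 2; 10; 9; 1; 16; 8; 0; 15; 7; 22; 14; 6; 21; 13; 5; 3; 11; 19; 4; 12; 20], [:: (8, 8)]));
  ((2, 1, 21), ([:: 19; 20; 3; 11; 12; 4; 2; 10; 18; 1; 9; 17; 0; 8; 16; 24; 7; 15; 23; 6; 14; 22; 5; 13; 21], [:: (11, 8)]));
  ((2, 1, 22), ([:: 8; 16; 15; 7; 25; 17; 9; 1; 19; 11; 3; 21; 13; 5; 23; 24; 0; 18; 10; 2; 20; 12; 4; 22; 14; 6], [:: (9, 8)]));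
  ((2, 1, 23), ([:: 11; 19; 18; 10; 2; 21; 13; 5; 3; 22; 14; 6; 25; 17; 9; 1; 20; 12; 4; 23; 15; 7; 26; 0; 8; 16; 24], [:: (13, 8)]));
  ((2, 1, 24), ([:: 9; 17; 25; 5; 13; 21; 1; 2; 22; 14; 6; 26; 18; 10; 8; 16; 24; 4; 12; 20; 0; 27; 19; 11; 3; 23; 15; 7], [:: (11, 8)]));
  ((2, 2, 12), ([:: 12; 13; 4; 6; 14; 5; 3; 11; 2; 10; 1; 9; 0; 8; 16; 15; 7], [::]));
  ((2, 2, 13), ([:: 7; 5; 13; 15; 14; 6; 16; 8; 0; 10; 2; 12; 4; 3; 11; 1; 9; 17], [::]));
  ((2, 2, 14), ([:: 11; 10; 18; 1; 12; 4; 15; 7; 9; 17; 6; 14; 3; 2; 13; 5; 16; 8; 0], [::]));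
  ((2, 2, 15), ([:: 16; 4; 5; 17; 9; 1; 13; 15; 3; 11; 19; 7; 8; 0; 12; 14; 6; 18; 10; 2], [::]));
  ((2, 2, 16), ([:: 1; 2; 15; 14; 6; 19; 11; 3; 16; 8; 0; 13; 5; 18; 10; 12; 4; 17; 9; 7; 20], [::]));
  ((2, 2, 17), ([:: 7; 15; 1; 2; 10; 18; 4; 12; 20; 6; 14; 16; 8; 0; 21; 13; 5; 19; 11; 9; 17; 3], [:: (13, 8)]));
  ((2, 2, 18), ([:: 12; 4; 19; 11; 3; 18; 10; 8; 16; 1; 2; 17; 9; 7; 15; 0; 22; 14; 6; 21; 13; 5; 20], [:: (12, 8)]));
  ((2, 2, 20), ([:: 8; 16; 14; 6; 7; 15; 23; 24; 22; 5; 13; 21; 4; 12; 20; 3; 11; 19; 2; 10; 18; 1; 9; 17; 0], [:: (12, 8)]));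
  ((2, 2, 21), ([:: 1; 9; 17; 15; 7; 8; 16; 24; 6; 14; 22; 4; 12; 20; 2; 10; 18; 0; 25; 23; 5; 13; 21; 3; 11; 19], [:: (9, 8)]));
  ((2, 2, 22), ([:: 24; 23; 15; 7; 26; 25; 17; 9; 1; 20; 12; 4; 6; 14; 22; 3; 11; 19; 0; 8; 16; 18; 10; 2; 21; 13; 5], [:: (11, 8)]));
  ((2, 2, 23), ([:: 17; 9; 8; 16; 24; 4; 12; 20; 0; 2; 22; 14; 6; 26; 18; 10; 11; 19; 27; 7; 15; 23; 3; 1; 21; 13; 5; 25], [:: (14, 8)]));
  ((2, 2, 24), ([:: 8; 16; 18; 10; 9; 17; 25; 4; 12; 20; 28; 7; 15; 23; 2; 1; 22; 14; 6; 27; 19; 11; 3; 24; 26; 5; 13; 21; 0], [:: (11, 8)]));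
  ((2, 3, 11), ([:: 3; 1; 2; 11; 10; 12; 4; 13; 5; 14; 6; 15; 7; 9; 0; 8; 16], [::]));
  ((2, 3, 12), ([:: 16; 14; 13; 5; 15; 7; 17; 9; 1; 11; 3; 4; 6; 8; 0; 10; 2; 12], [::]));
  ((2, 3, 13), ([:: 14; 16; 15; 7; 18; 10; 2; 13; 5; 4; 12; 1; 3; 11; 0; 8; 6; 17; 9], [::]));
  ((2, 3, 14), ([:: 6; 14; 15; 13; 5; 17; 9; 1; 3; 11; 19; 7; 8; 16; 4; 12; 0; 2; 10; 18], [::]));
  ((2, 3, 15), ([:: 1; 20; 19; 11; 9; 17; 4; 12; 14; 6; 7; 15; 2; 10; 18; 5; 13; 0; 8; 16; 3], [::]));
  ((2, 3, 16), ([:: 15; 17; 3; 11; 9; 1; 0; 14; 6; 20; 12; 4; 18; 10; 2; 16; 8; 7; 21; 19; 5; 13], [::]));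
  ((2, 3, 17), ([:: 12; 4; 19; 11; 10; 18; 20; 5; 13; 15; 7; 22; 14; 6; 21; 0; 8; 16; 1; 9; 17; 2; 3], [:: (12, 8)]));
  ((2, 3, 19), ([:: 1; 9; 11; 3; 2; 10; 18; 20; 19; 17; 0; 8; 16; 24; 7; 15; 23; 6; 14; 22; 5; 13; 21; 4; 12], [:: (9, 8)]));
  ((2, 3, 20), ([:: 23; 24; 22; 4; 12; 20; 2; 10; 18; 0; 8; 16; 14; 6; 5; 13; 21; 3; 11; 19; 1; 9; 17; 15; 7; 25], [:: (14, 8)]));
  ((2, 3, 21), ([:: 19; 0; 1; 9; 17; 25; 24; 16; 8; 6; 14; 22; 20; 12; 4; 23; 15; 7; 26; 18; 10; 2; 21; 13; 5; 3; 11], [:: (9, 8)]));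
  ((2, 3, 22), ([:: 22; 20; 0; 8; 16; 14; 6; 26; 18; 10; 2; 3; 11; 19; 27; 7; 15; 23; 21; 1; 9; 17; 25; 5; 13; 12; 4; 24], [:: (12, 8)]));
  ((2, 3, 23), ([:: 28; 26; 25; 17; 9; 7; 15; 23; 2; 10; 18; 20; 12; 4; 5; 13; 21; 0; 8; 16; 24; 3; 11; 19; 27; 6; 14; 22; 1], [:: (11, 8)]));
  ((2, 3, 24), ([:: 20; 22; 21; 13; 5; 27; 19; 11; 3; 25; 17; 9; 1; 23; 15; 7; 29; 0; 28; 6; 14; 12; 4; 26; 18; 10; 2; 24; 16; 8], [:: (12, 8)]));
  ((2, 4, 10), ([:: 7; 15; 13; 14; 12; 4; 6; 5; 3; 11; 2; 10; 1; 9; 0; 8; 16], [::]));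
  ((2, 4, 11), ([:: 8; 9; 7; 17; 1; 3; 11; 13; 5; 15; 16; 6; 14; 4; 12; 2; 10; 0], [::]));
  ((2, 4, 12), ([:: 7; 18; 0; 1; 12; 10; 2; 13; 5; 16; 8; 6; 14; 3; 11; 9; 17; 15; 4], [::]));
  ((2, 4, 13), ([:: 15; 7; 8; 10; 2; 0; 12; 4; 16; 18; 6; 14; 13; 5; 17; 9; 1; 19; 11; 3], [::]));
  ((2, 4, 14), ([:: 14; 1; 0; 2; 10; 9; 17; 4; 12; 20; 7; 15; 13; 5; 18; 16; 8; 6; 19; 11; 3], [::]));
  ((2, 4, 15), ([:: 13; 11; 12; 10; 18; 4; 2; 16; 8; 0; 14; 6; 20; 19; 5; 3; 17; 9; 1; 15; 7; 21], [::]));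
  ((2, 4, 16), ([:: 20; 22; 0; 15; 13; 5; 7; 8; 16; 1; 9; 17; 2; 10; 18; 3; 11; 19; 4; 12; 14; 6; 21], [::]));
  ((2, 4, 18), ([:: 14; 6; 7; 15; 13; 5; 3; 11; 19; 2; 10; 18; 1; 9; 17; 0; 8; 16; 24; 23; 21; 4; 12; 20; 22], [:: (8, 8)]));
  ((2, 4, 19), ([:: 9; 17; 18; 10; 2; 20; 12; 4; 6; 14; 22; 24; 0; 8; 16; 15; 7; 25; 23; 5; 13; 21; 3; 11; 19; 1], [:: (10, 8)]));
  ((2, 4, 20), ([:: 14; 6; 25; 17; 9; 11; 19; 21; 23; 4; 12; 20; 1; 0; 8; 16; 24; 5; 13; 15; 7; 26; 18; 10; 2; 3; 22], [:: (13, 8)]));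
  ((2, 4, 21), ([:: 22; 20; 0; 8; 16; 24; 26; 18; 10; 2; 3; 11; 19; 27; 7; 15; 23; 25; 17; 9; 1; 21; 13; 5; 6; 14; 12; 4], [:: (10, 8)]));
  ((2, 4, 22), ([:: 13; 5; 4; 12; 14; 6; 27; 25; 26; 18; 10; 2; 23; 15; 7; 28; 20; 22; 1; 9; 17; 19; 11; 3; 24; 16; 8; 0; 21], [:: (8, 8)]));
  ((2, 4, 23), ([:: 15; 7; 5; 13; 21; 20; 12; 4; 2; 10; 18; 26; 28; 6; 14; 22; 0; 8; 16; 24; 23; 1; 9; 17; 25; 3; 11; 19; 27; 29], [:: (13, 8)]));
  ((2, 4, 24), ([:: 1; 24; 25; 2; 10; 18; 26; 28; 20; 12; 4; 27; 19; 11; 3; 5; 13; 21; 29; 6; 14; 16; 8; 0; 23; 22; 30; 7; 15; 17; 9], [:: (14, 8)]));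
  ((3, 1, 12), ([:: 8; 6; 7; 15; 14; 5; 13; 4; 12; 3; 11; 2; 10; 1; 9; 0; 16], [::]));
  ((3, 1, 13), ([:: 11; 3; 2; 12; 4; 14; 13; 5; 15; 7; 17; 1; 9; 10; 0; 8; 16; 6], [::]));
  ((3, 1, 14), ([:: 7; 15; 17; 9; 1; 12; 4; 3; 11; 0; 8; 16; 5; 6; 14; 13; 2; 10; 18], [::]));
  ((3, 1, 15), ([:: 6; 18; 19; 11; 3; 15; 7; 8; 0; 12; 4; 16; 14; 2; 10; 9; 17; 5; 13; 1], [::]));
  ((3, 1, 16), ([:: 2; 3; 4; 12; 20; 7; 15; 17; 9; 1; 14; 6; 19; 11; 10; 18; 5; 13; 0; 8; 16], [::]));
  ((3, 1, 17), ([:: 21; 20; 12; 4; 18; 10; 2; 16; 8; 7; 15; 13; 5; 19; 11; 3; 17; 9; 1; 0; 14; 6], [:: (13, 8)]));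
  ((3, 1, 18), ([:: 15; 7; 8; 16; 14; 6; 21; 13; 5; 20; 12; 4; 19; 11; 3; 18; 10; 2; 17; 9; 1; 0; 22], [:: (9, 8)]));
  ((3, 1, 20), ([:: 5; 13; 15; 7; 6; 14; 22; 23; 24; 16; 8; 0; 17; 9; 1; 18; 10; 2; 19; 11; 3; 20; 12; 4; 21], [:: (11, 8)]));
  ((3, 1, 21), ([:: 6; 14; 15; 7; 25; 17; 9; 1; 0; 8; 16; 24; 22; 4; 12; 20; 2; 10; 18; 19; 11; 3; 21; 13; 5; 23], [:: (11, 8)]));
  ((3, 1, 22), ([:: 4; 12; 20; 1; 0; 8; 16; 24; 5; 13; 21; 19; 11; 3; 2; 10; 18; 26; 7; 15; 23; 22; 14; 6; 25; 17; 9], [:: (12, 8)]));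
  ((3, 1, 23), ([:: 25; 24; 4; 12; 20; 0; 8; 16; 17; 9; 1; 21; 13; 5; 7; 15; 23; 3; 11; 19; 27; 26; 6; 14; 22; 2; 10; 18], [:: (9, 8)]));
  ((3, 1, 24), ([:: 17; 9; 10; 18; 16; 8; 0; 21; 13; 5; 26; 25; 4; 12; 20; 28; 7; 15; 23; 2; 1; 22; 14; 6; 27; 19; 11; 3; 24], [:: (14, 8)]));
  ((3, 2, 11), ([:: 13; 14; 5; 3; 11; 10; 2; 1; 9; 0; 8; 16; 7; 15; 6; 4; 12], [::]));
  ((3, 2, 12), ([:: 5; 6; 16; 17; 15; 7; 9; 1; 11; 3; 13; 14; 4; 12; 2; 10; 0; 8], [::]));
  ((3, 2, 13), ([:: 1; 9; 17; 18; 7; 5; 6; 14; 3; 11; 0; 8; 16; 15; 4; 12; 10; 2; 13], [::]));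
  ((3, 2, 14), ([:: 8; 9; 1; 0; 12; 4; 16; 14; 6; 18; 10; 2; 3; 11; 19; 7; 15; 13; 5; 17], [::]));
  ((3, 2, 15), ([:: 18; 20; 7; 5; 6; 19; 11; 3; 16; 8; 0; 13; 12; 4; 17; 9; 1; 14; 15; 2; 10], [::]));
  ((3, 2, 16), ([:: 7; 8; 10; 18; 4; 2; 16; 15; 1; 9; 17; 3; 11; 19; 5; 13; 21; 0; 14; 6; 20; 12], [::]));
  ((3, 2, 17), ([:: 20; 12; 4; 19; 17; 9; 1; 2; 10; 11; 3; 18; 16; 8; 0; 15; 7; 22; 14; 6; 5; 13; 21], [:: (10, 8)]));
  ((3, 2, 19), ([:: 5; 13; 14; 6; 4; 12; 20; 3; 11; 19; 21; 22; 23; 15; 7; 24; 16; 8; 0; 17; 9; 1; 18; 10; 2], [:: (9, 8)]));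
  ((3, 2, 20), ([:: 18; 10; 11; 19; 17; 9; 1; 25; 0; 8; 16; 24; 6; 14; 22; 4; 12; 20; 2; 3; 21; 13; 5; 23; 15; 7], [:: (12, 8)]));
  ((3, 2, 21), ([:: 14; 6; 7; 15; 23; 4; 12; 10; 2; 21; 13; 5; 24; 16; 8; 0; 26; 18; 19; 11; 3; 22; 20; 1; 9; 17; 25], [:: (8, 8)]));
  ((3, 2, 22), ([:: 26; 0; 8; 16; 15; 7; 27; 19; 11; 3; 23; 24; 4; 12; 20; 18; 10; 2; 22; 14; 6; 5; 13; 21; 1; 9; 17; 25], [:: (8, 8)]));
  ((3, 2, 23), ([:: 19; 11; 10; 18; 17; 9; 1; 22; 14; 6; 27; 25; 4; 12; 20; 28; 7; 15; 23; 2; 3; 24; 26; 5; 13; 21; 0; 8; 16], [:: (13, 8)]));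
  ((3, 2, 24), ([:: 16; 8; 6; 14; 13; 5; 27; 19; 11; 3; 25; 17; 9; 1; 23; 24; 2; 10; 18; 26; 4; 12; 20; 28; 0; 22; 21; 29; 7; 15], [:: (9, 8)]));
  ((3, 3, 10), ([:: 10; 1; 9; 0; 16; 8; 6; 15; 7; 5; 14; 12; 13; 4; 3; 11; 2], [::]));
  ((3, 3, 11), ([:: 12; 4; 5; 6; 14; 16; 8; 0; 10; 2; 1; 11; 3; 13; 15; 7; 9; 17], [::]));
  ((3, 3, 12), ([:: 15; 17; 18; 7; 6; 8; 0; 11; 3; 14; 16; 5; 13; 2; 10; 9; 1; 12; 4], [::]));
  ((3, 3, 13), ([:: 19; 0; 8; 9; 17; 5; 7; 15; 3; 11; 13; 1; 2; 14; 6; 18; 10; 12; 4; 16], [::]));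
  ((3, 3, 14), ([:: 12; 4; 3; 2; 10; 11; 19; 6; 14; 1; 9; 17; 15; 7; 20; 18; 16; 8; 0; 13; 5], [::]));
  ((3, 3, 15), ([:: 10; 8; 16; 15; 1; 9; 7; 21; 13; 5; 19; 11; 3; 2; 0; 14; 6; 20; 12; 4; 18; 17], [::]));
  ((3, 3, 16), ([:: 13; 21; 20; 18; 19; 11; 3; 5; 4; 12; 10; 2; 17; 9; 1; 16; 8; 0; 15; 7; 22; 14; 6], [::]));
  ((3, 3, 18), ([:: 3; 11; 12; 4; 21; 13; 5; 22; 14; 6; 23; 0; 8; 10; 2; 19; 20; 18; 1; 9; 17; 16; 24; 7; 15], [:: (8, 8)]));
  ((3, 3, 19), ([:: 17; 9; 8; 16; 15; 7; 5; 13; 21; 3; 11; 19; 1; 25; 23; 24; 6; 14; 22; 4; 12; 20; 2; 10; 18; 0], [:: (11, 8)]));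
  ((3, 3, 20), ([:: 22; 21; 2; 10; 9; 1; 3; 11; 19; 0; 8; 16; 24; 5; 13; 14; 6; 25; 17; 15; 7; 26; 18; 20; 12; 4; 23], [:: (9, 8)]));
  ((3, 3, 21), ([:: 18; 10; 2; 4; 12; 13; 5; 7; 15; 23; 3; 11; 19; 27; 26; 6; 14; 22; 24; 16; 8; 0; 20; 21; 1; 9; 17; 25], [:: (9, 8)]));
  ((3, 3, 22), ([:: 25; 23; 22; 21; 0; 8; 16; 24; 3; 11; 19; 27; 6; 14; 13; 5; 26; 18; 10; 2; 4; 12; 20; 28; 7; 15; 17; 9; 1], [:: (9, 8)]));
  ((3, 3, 23), ([:: 11; 19; 20; 21; 13; 5; 27; 29; 7; 15; 23; 1; 9; 17; 25; 3; 4; 12; 14; 6; 28; 26; 18; 10; 2; 24; 16; 8; 0; 22], [:: (12, 8)]));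
  ((3, 3, 24), ([:: 27; 25; 26; 28; 20; 12; 4; 5; 13; 21; 29; 6; 14; 22; 30; 7; 15; 23; 0; 8; 16; 24; 1; 9; 17; 19; 11; 3; 2; 10; 18], [:: (8, 8)]));
  ((4, 1, 11), ([:: 1; 2; 11; 10; 8; 9; 0; 16; 7; 15; 6; 14; 5; 13; 4; 12; 3], [::]));
  ((4, 1, 12), ([:: 4; 3; 11; 13; 5; 15; 14; 6; 16; 8; 7; 17; 9; 1; 0; 10; 2; 12], [::]));
  ((4, 1, 13), ([:: 11; 12; 14; 3; 4; 15; 7; 6; 17; 9; 1; 0; 8; 16; 5; 13; 2; 10; 18], [::]));
  ((4, 1, 14), ([:: 3; 11; 19; 1; 2; 10; 18; 6; 14; 13; 5; 17; 9; 8; 0; 12; 4; 16; 15; 7], [::]));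
  ((4, 1, 15), ([:: 7; 5; 13; 0; 1; 9; 8; 16; 3; 11; 19; 6; 14; 15; 2; 10; 18; 17; 4; 12; 20], [::]));
  ((4, 1, 16), ([:: 9; 8; 6; 20; 12; 4; 18; 10; 2; 16; 17; 3; 11; 19; 5; 13; 21; 7; 15; 14; 0; 1], [::]));
  ((4, 1, 17), ([:: 9; 1; 3; 11; 19; 20; 12; 4; 5; 13; 21; 6; 14; 22; 7; 15; 0; 8; 16; 17; 18; 10; 2], [:: (9, 8)]));
  ((4, 1, 19), ([:: 3; 11; 19; 20; 21; 4; 12; 13; 5; 22; 14; 6; 23; 15; 7; 24; 16; 8; 0; 2; 10; 18; 17; 9; 1], [:: (11, 8)]));
  ((4, 1, 20), ([:: 15; 7; 8; 16; 24; 23; 22; 14; 6; 4; 12; 20; 2; 10; 18; 0; 25; 17; 9; 1; 19; 11; 3; 21; 13; 5], [:: (13, 8)]));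
  ((4, 1, 21), ([:: 19; 11; 10; 18; 20; 12; 4; 23; 15; 7; 26; 0; 1; 9; 17; 25; 6; 14; 22; 3; 2; 21; 13; 5; 24; 16; 8], [:: (12, 8)]));
  ((4, 1, 22), ([:: 7; 15; 23; 22; 20; 12; 4; 24; 16; 8; 0; 27; 19; 11; 3; 2; 10; 18; 26; 6; 14; 13; 5; 25; 17; 9; 1; 21], [:: (8, 8)]));
  ((4, 1, 23), ([:: 10; 2; 1; 9; 17; 25; 24; 16; 8; 0; 21; 13; 5; 26; 18; 20; 28; 7; 15; 23; 22; 14; 6; 27; 19; 11; 3; 4; 12], [:: (9, 8)]));
  ((4, 1, 24), ([:: 25; 17; 9; 1; 23; 21; 13; 5; 6; 14; 22; 0; 8; 16; 24; 2; 10; 18; 26; 27; 19; 11; 3; 4; 12; 20; 28; 29; 7; 15], [:: (10, 8)]));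
  ((4, 2, 10), ([:: 0; 9; 1; 2; 3; 12; 11; 10; 8; 16; 7; 15; 6; 4; 13; 5; 14], [::]));
  ((4, 2, 11), ([:: 6; 5; 15; 16; 0; 10; 8; 7; 17; 9; 1; 11; 3; 13; 14; 4; 12; 2], [::]));
  ((4, 2, 12), ([:: 5; 13; 14; 12; 1; 0; 11; 3; 2; 10; 18; 7; 15; 4; 6; 17; 9; 8; 16], [::]));
  ((4, 2, 13), ([:: 3; 1; 13; 12; 4; 5; 17; 9; 10; 2; 14; 6; 18; 0; 8; 16; 15; 7; 19; 11], [::]));
  ((4, 2, 14), ([:: 0; 1; 14; 12; 4; 17; 9; 8; 16; 3; 11; 13; 5; 18; 10; 2; 15; 7; 6; 19; 20], [::]));
  ((4, 2, 15), ([:: 10; 18; 20; 21; 13; 5; 19; 17; 9; 1; 15; 7; 6; 14; 0; 8; 16; 2; 3; 11; 12; 4], [::]));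
  ((4, 2, 16), ([:: 2; 0; 15; 7; 8; 6; 14; 22; 21; 13; 5; 20; 12; 4; 19; 11; 3; 18; 10; 9; 1; 16; 17], [::]));
  ((4, 2, 18), ([:: 2; 10; 18; 16; 8; 0; 24; 23; 15; 7; 6; 14; 22; 5; 13; 21; 4; 12; 20; 19; 11; 3; 1; 9; 17], [:: (13, 8)]));
  ((4, 2, 19), ([:: 19; 1; 9; 10; 2; 0; 8; 16; 15; 7; 25; 17; 18; 20; 12; 4; 22; 14; 6; 24; 23; 5; 13; 21; 3; 11], [:: (8, 8)]));
  ((4, 2, 20), ([:: 2; 4; 12; 13; 5; 6; 14; 22; 3; 11; 19; 0; 8; 16; 24; 25; 17; 9; 1; 20; 21; 23; 15; 7; 26; 18; 10], [:: (12, 8)]));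
  ((4, 2, 21), ([:: 1; 9; 10; 2; 22; 23; 3; 11; 19; 27; 7; 15; 17; 18; 26; 6; 14; 16; 8; 0; 20; 12; 4; 24; 25; 5; 13; 21], [:: (8, 8)]));
  ((4, 2, 22), ([:: 28; 26; 5; 13; 21; 20; 19; 27; 0; 8; 16; 24; 3; 11; 12; 4; 25; 17; 9; 1; 22; 14; 6; 7; 15; 23; 2; 10; 18], [:: (10, 8)]));
  ((4, 2, 23), ([:: 28; 27; 29; 0; 8; 16; 24; 2; 10; 18; 26; 4; 12; 20; 19; 11; 3; 25; 17; 9; 1; 23; 15; 7; 5; 13; 21; 22; 14; 6], [:: (11, 8)]));
  ((4, 2, 24), ([:: 6; 14; 22; 23; 25; 17; 9; 1; 24; 26; 18; 10; 2; 3; 11; 19; 27; 4; 12; 20; 28; 5; 13; 21; 29; 30; 7; 15; 16; 8; 0], [:: (13, 8)]));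
  ((5, 1, 10), ([:: 11; 10; 2; 4; 3; 12; 13; 5; 6; 14; 15; 7; 16; 8; 0; 9; 1], [::]));
  ((5, 1, 11), ([:: 16; 0; 10; 2; 1; 11; 3; 13; 12; 4; 14; 6; 5; 15; 7; 8; 9; 17], [::]));
  ((5, 1, 12), ([:: 12; 13; 2; 1; 9; 10; 8; 16; 5; 4; 15; 7; 18; 17; 6; 14; 3; 11; 0], [::]));
  ((5, 1, 13), ([:: 15; 14; 16; 17; 9; 1; 13; 5; 6; 18; 10; 2; 3; 11; 19; 7; 8; 0; 12; 4], [::]));
  ((5, 1, 14), ([:: 20; 0; 2; 15; 7; 8; 16; 17; 4; 12; 13; 5; 18; 10; 9; 1; 14; 6; 19; 11; 3], [::]));
  ((5, 1, 15), ([:: 3; 2; 4; 18; 17; 16; 8; 0; 14; 6; 20; 12; 11; 19; 5; 13; 21; 7; 15; 1; 9; 10], [::]));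
  ((5, 1, 16), ([:: 13; 14; 22; 21; 0; 8; 7; 15; 16; 1; 9; 17; 2; 10; 18; 3; 11; 19; 4; 12; 20; 5; 6], [::]));
  ((5, 1, 18), ([:: 22; 23; 15; 7; 24; 0; 17; 9; 10; 18; 1; 2; 19; 11; 3; 20; 12; 4; 21; 13; 5; 6; 14; 16; 8], [:: (14, 8)]));
  ((5, 1, 19), ([:: 17; 9; 8; 16; 24; 6; 14; 13; 5; 23; 15; 7; 25; 1; 0; 18; 10; 2; 20; 19; 11; 3; 21; 22; 4; 12], [:: (11, 8)]));
  ((5, 1, 20), ([:: 22; 21; 19; 0; 8; 16; 24; 5; 13; 14; 6; 25; 26; 7; 15; 23; 4; 12; 20; 1; 9; 17; 18; 10; 2; 3; 11], [:: (10, 8)]));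
  ((5, 1, 21), ([:: 25; 5; 13; 14; 6; 26; 27; 19; 11; 3; 23; 15; 7; 9; 17; 18; 10; 2; 22; 21; 1; 0; 20; 12; 4; 24; 16; 8], [:: (12, 8)]));
  ((5, 1, 22), ([:: 2; 23; 21; 13; 5; 6; 14; 15; 7; 28; 20; 12; 4; 25; 17; 9; 10; 18; 26; 27; 19; 11; 3; 24; 16; 8; 0; 1; 22], [:: (14, 8)]));
  ((5, 1, 23), ([:: 12; 4; 5; 13; 14; 6; 28; 20; 21; 29; 1; 9; 17; 25; 3; 11; 19; 27; 26; 18; 10; 2; 24; 16; 8; 0; 22; 23; 15; 7], [:: (10, 8)]));
  ((5, 1, 24), ([:: 0; 1; 9; 17; 16; 8; 10; 18; 26; 25; 2; 3; 11; 19; 27; 4; 12; 20; 28; 5; 13; 21; 29; 6; 14; 22; 30; 7; 15; 23; 24], [:: (14, 8)]));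
  ((1, 13, 1), ([:: 11; 9; 7; 5; 13; 15; 1; 3; 2; 0; 14; 12; 10; 8; 6; 4], [::]));
  ((2, 12, 1), ([:: 15; 1; 3; 4; 6; 8; 10; 2; 0; 14; 12; 13; 11; 9; 7; 5], [::]));
  ((3, 11, 1), ([:: 10; 12; 14; 13; 15; 7; 5; 3; 1; 0; 2; 4; 6; 8; 9; 11], [::]));
  ((4, 10, 1), ([:: 7; 6; 4; 2; 3; 5; 13; 15; 1; 0; 14; 12; 10; 8; 9; 11], [::]));
  ((5, 9, 1), ([:: 3; 1; 9; 8; 7; 5; 6; 4; 2; 0; 14; 15; 13; 11; 12; 10], [::]));
  ((6, 8, 1), ([:: 12; 4; 5; 3; 1; 2; 0; 14; 15; 13; 11; 9; 10; 8; 7; 6], [::]));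
  ((7, 7, 1), ([:: 14; 15; 1; 2; 0; 8; 6; 4; 3; 5; 7; 9; 10; 11; 12; 13], [::]));
  ((8, 6, 1), ([:: 0; 8; 10; 9; 7; 5; 6; 4; 3; 2; 1; 15; 14; 13; 11; 12], [::]));
  ((9, 5, 1), ([:: 6; 5; 7; 8; 10; 9; 1; 3; 4; 2; 0; 15; 14; 13; 12; 11], [::]));
  ((10, 4, 1), ([:: 14; 12; 4; 3; 2; 1; 0; 15; 13; 11; 10; 9; 8; 7; 5; 6], [::]));
  ((11, 3, 1), ([:: 10; 11; 13; 12; 14; 15; 0; 8; 9; 7; 6; 5; 4; 3; 2; 1], [::]));
  ((12, 2, 1), ([:: 15; 13; 12; 11; 10; 9; 8; 7; 6; 14; 0; 1; 2; 3; 4; 5], [::]));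
  ((13, 1, 1), ([:: 2; 1; 3; 4; 5; 6; 7; 8; 0; 15; 14; 13; 12; 11; 10; 9], [::]));
  ((1, 14, 1), ([:: 13; 15; 0; 1; 3; 5; 7; 9; 11; 2; 4; 6; 8; 10; 12; 14; 16], [:: (3, 2)]));
  ((2, 13, 1), ([:: 8; 10; 12; 14; 16; 1; 3; 5; 6; 7; 9; 11; 13; 4; 2; 0; 15], [:: (6, 1)]));
  ((3, 12, 1), ([:: 7; 5; 6; 4; 3; 1; 16; 14; 12; 10; 8; 9; 11; 2; 0; 15; 13], [:: (4, 1)]));
  ((4, 11, 1), ([:: 2; 3; 11; 13; 15; 0; 1; 16; 14; 12; 10; 8; 9; 7; 5; 4; 6], [:: (3, 1)]));
  ((5, 10, 1), ([:: 11; 9; 8; 10; 12; 14; 16; 1; 0; 2; 3; 4; 6; 7; 5; 13; 15], [:: (4, 1)]));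
  ((6, 9, 1), ([:: 2; 10; 12; 11; 9; 7; 8; 6; 4; 5; 3; 1; 0; 15; 16; 14; 13], [:: (1, 1)]));
  ((7, 8, 1), ([:: 16; 14; 6; 7; 5; 3; 4; 2; 1; 0; 15; 13; 11; 12; 10; 9; 8], [:: (2, 1)]));
  ((8, 7, 1), ([:: 10; 8; 6; 14; 16; 0; 1; 2; 3; 4; 5; 7; 9; 11; 12; 13; 15], [:: (5, 1)]));
  ((9, 6, 1), ([:: 1; 2; 11; 13; 15; 0; 16; 14; 12; 10; 9; 8; 7; 6; 5; 4; 3], [:: (7, 1)]));
  ((10, 5, 1), ([:: 15; 0; 1; 2; 3; 4; 5; 7; 9; 10; 11; 12; 13; 14; 16; 8; 6], [:: (5, 1)]));
  ((11, 4, 1), ([:: 5; 13; 14; 12; 11; 9; 10; 8; 7; 6; 4; 3; 2; 1; 0; 16; 15], [:: (4, 1)]));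
  ((12, 3, 1), ([:: 13; 14; 16; 15; 0; 1; 2; 3; 4; 12; 11; 10; 9; 8; 7; 5; 6], [:: (3, 1)]));
  ((13, 2, 1), ([:: 12; 14; 13; 11; 10; 9; 8; 7; 15; 16; 0; 1; 2; 3; 4; 5; 6], [:: (3, 1)]));
  ((14, 1, 1), ([:: 1; 10; 9; 8; 7; 6; 5; 4; 3; 2; 0; 16; 15; 14; 13; 12; 11], [:: (6, 1)]));
  ((1, 15, 1), ([:: 2; 0; 16; 14; 12; 10; 8; 6; 4; 5; 3; 1; 17; 7; 9; 11; 13; 15], [:: (8, 2)]));
  ((2, 14, 1), ([:: 16; 0; 2; 4; 14; 12; 10; 8; 7; 9; 11; 13; 15; 17; 1; 3; 5; 6], [:: (10, 2); (6, 1)]));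
  ((3, 13, 1), ([:: 8; 16; 0; 2; 4; 6; 7; 5; 3; 1; 17; 15; 14; 12; 10; 9; 11; 13], [::]));
  ((4, 12, 1), ([:: 9; 7; 15; 17; 0; 16; 14; 12; 13; 11; 10; 8; 6; 4; 2; 1; 3; 5], [::]));
  ((5, 11, 1), ([:: 6; 16; 0; 17; 1; 2; 4; 3; 5; 7; 8; 10; 12; 14; 15; 13; 11; 9], [::]));
  ((6, 10, 1), ([:: 14; 16; 15; 17; 0; 10; 12; 13; 11; 9; 7; 8; 6; 5; 3; 1; 2; 4], [::]));
  ((7, 9, 1), ([:: 2; 12; 11; 13; 14; 15; 16; 0; 17; 1; 3; 5; 4; 6; 8; 10; 9; 7], [::]));
  ((8, 8, 1), ([:: 15; 17; 16; 14; 6; 4; 2; 0; 1; 3; 5; 7; 8; 9; 10; 11; 12; 13], [::]));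
  ((9, 7, 1), ([:: 5; 13; 14; 12; 10; 11; 9; 8; 7; 6; 4; 3; 2; 1; 17; 15; 16; 0], [::]));
  ((10, 6, 1), ([:: 0; 16; 15; 14; 13; 11; 9; 17; 1; 2; 3; 4; 5; 6; 7; 8; 10; 12], [::]));
  ((11, 5, 1), ([:: 3; 1; 2; 0; 16; 17; 15; 13; 14; 4; 5; 6; 7; 8; 9; 10; 11; 12], [::]));
  ((12, 4, 1), ([:: 13; 3; 5; 4; 6; 7; 8; 9; 10; 11; 12; 14; 15; 16; 17; 0; 2; 1], [::]));
  ((13, 3, 1), ([:: 1; 2; 0; 16; 17; 15; 14; 13; 12; 11; 3; 4; 5; 6; 7; 8; 9; 10], [::]));
  ((14, 2, 1), ([:: 16; 14; 13; 12; 11; 10; 9; 8; 7; 6; 5; 15; 17; 0; 1; 2; 3; 4], [::]));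
  ((15, 1, 1), ([:: 0; 8; 7; 6; 5; 4; 3; 2; 1; 17; 16; 15; 14; 13; 12; 11; 10; 9], [::]));
  ((2, 15, 1), ([:: 14; 16; 18; 1; 12; 10; 8; 6; 4; 3; 2; 0; 17; 15; 13; 11; 9; 7; 5], [:: (11, 2); (4, 1)]));
  ((1, 12, 2), ([:: 11; 9; 7; 15; 1; 3; 5; 13; 12; 14; 0; 2; 4; 6; 8; 10], [::]));
  ((2, 11, 2), ([:: 1; 15; 14; 0; 2; 4; 12; 10; 8; 6; 7; 9; 11; 13; 5; 3], [::]));
  ((3, 10, 2), ([:: 4; 5; 7; 6; 8; 10; 2; 0; 14; 12; 13; 15; 1; 3; 11; 9], [::]));
  ((4, 9, 2), ([:: 11; 12; 4; 6; 7; 5; 3; 1; 15; 13; 14; 0; 2; 10; 8; 9], [::]));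
  ((5, 8, 2), ([:: 5; 13; 14; 15; 1; 0; 2; 4; 3; 11; 9; 7; 6; 8; 10; 12], [::]));
  ((6, 7, 2), ([:: 6; 8; 7; 5; 13; 11; 10; 9; 1; 3; 4; 2; 0; 15; 14; 12], [::]));
  ((7, 6, 2), ([:: 4; 3; 5; 7; 8; 6; 14; 15; 1; 0; 2; 10; 9; 11; 12; 13], [::]));
  ((8, 5, 2), ([:: 0; 8; 10; 12; 11; 9; 7; 6; 5; 13; 14; 15; 1; 2; 3; 4], [::]));
  ((9, 4, 2), ([:: 15; 7; 5; 6; 4; 3; 2; 1; 0; 8; 10; 9; 11; 12; 13; 14], [::]));
  ((10, 3, 2), ([:: 2; 3; 5; 6; 7; 8; 10; 9; 1; 0; 15; 14; 13; 11; 12; 4], [::]));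
  ((11, 2, 2), ([:: 0; 15; 13; 14; 6; 7; 8; 9; 10; 11; 12; 4; 5; 3; 2; 1], [::]));
  ((12, 1, 2), ([:: 13; 14; 6; 7; 8; 9; 10; 11; 12; 4; 5; 3; 2; 1; 0; 15], [::]));
  ((1, 13, 2), ([:: 14; 16; 8; 6; 4; 2; 0; 15; 13; 11; 12; 10; 1; 3; 5; 7; 9], [:: (4, 2)]));
  ((2, 12, 2), ([:: 8; 6; 5; 3; 1; 16; 14; 12; 10; 9; 11; 13; 4; 2; 0; 15; 7], [:: (6, 1)]));
  ((3, 11, 2), ([:: 12; 10; 9; 7; 5; 13; 11; 2; 0; 15; 14; 16; 1; 3; 4; 6; 8], [:: (4, 1)]));
  ((4, 10, 2), ([:: 9; 7; 5; 6; 14; 16; 8; 10; 12; 11; 13; 15; 0; 1; 3; 2; 4], [:: (1, 1)]));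
  ((5, 9, 2), ([:: 7; 5; 4; 13; 12; 10; 11; 9; 8; 6; 14; 16; 1; 3; 2; 0; 15], [:: (5, 1)]));
  ((6, 8, 2), ([:: 14; 5; 4; 3; 1; 2; 0; 15; 16; 8; 10; 12; 13; 11; 9; 7; 6], [:: (7, 1)]));
  ((7, 7, 2), ([:: 6; 5; 4; 3; 1; 10; 12; 14; 13; 15; 16; 0; 2; 11; 9; 7; 8], [:: (4, 1)]));
  ((8, 6, 2), ([:: 12; 3; 1; 2; 0; 16; 15; 14; 13; 4; 5; 6; 8; 10; 11; 9; 7], [:: (5, 1)]));
  ((9, 5, 2), ([:: 15; 7; 8; 9; 10; 11; 3; 5; 6; 4; 2; 1; 0; 16; 14; 12; 13], [:: (2, 1)]));
  ((10, 4, 2), ([:: 12; 14; 6; 7; 9; 8; 10; 11; 13; 5; 4; 3; 2; 1; 0; 16; 15], [:: (5, 1)]));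
  ((11, 3, 2), ([:: 7; 6; 15; 16; 14; 13; 12; 11; 10; 8; 9; 0; 1; 2; 3; 5; 4], [:: (7, 1)]));
  ((12, 2, 2), ([:: 9; 0; 2; 1; 3; 4; 5; 6; 7; 8; 16; 15; 14; 13; 12; 11; 10], [:: (7, 1)]));
  ((13, 1, 2), ([:: 2; 3; 11; 12; 13; 14; 15; 16; 0; 1; 10; 9; 8; 7; 6; 4; 5], [:: (3, 1)]));
  ((1, 14, 2), ([:: 0; 10; 12; 14; 16; 8; 6; 4; 2; 1; 17; 15; 13; 11; 9; 7; 5; 3], [:: (8, 2)]));
  ((2, 13, 2), ([:: 16; 0; 2; 3; 1; 17; 15; 5; 7; 9; 11; 13; 14; 4; 6; 8; 10; 12], [:: (14, 1); (6, 2)]));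
  ((3, 12, 2), ([:: 14; 12; 4; 2; 10; 8; 6; 7; 9; 11; 13; 15; 17; 16; 0; 1; 3; 5], [::]));
  ((4, 11, 2), ([:: 1; 11; 10; 12; 13; 3; 5; 7; 9; 8; 6; 4; 2; 0; 16; 14; 15; 17], [::]));
  ((5, 10, 2), ([:: 5; 15; 16; 8; 10; 12; 14; 13; 11; 9; 7; 6; 4; 2; 3; 1; 17; 0], [::]));
  ((6, 9, 2), ([:: 2; 4; 12; 13; 15; 17; 9; 11; 10; 8; 7; 6; 5; 3; 1; 0; 16; 14], [::]));
  ((7, 8, 2), ([:: 3; 5; 6; 14; 16; 8; 7; 9; 11; 10; 12; 13; 15; 17; 0; 1; 2; 4], [::]));
  ((8, 7, 2), ([:: 10; 0; 17; 7; 5; 3; 1; 2; 4; 6; 8; 9; 11; 12; 13; 14; 15; 16], [::]));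
  ((9, 6, 2), ([:: 15; 13; 12; 2; 10; 11; 9; 8; 6; 7; 5; 4; 3; 1; 0; 17; 16; 14], [::]));
  ((10, 5, 2), ([:: 11; 1; 9; 10; 12; 13; 15; 14; 16; 17; 0; 2; 3; 4; 5; 6; 8; 7], [::]));
  ((11, 4, 2), ([:: 6; 7; 17; 15; 14; 13; 11; 12; 10; 9; 8; 16; 0; 1; 2; 3; 4; 5], [::]));
  ((12, 3, 2), ([:: 7; 15; 14; 13; 11; 12; 10; 9; 8; 6; 16; 17; 0; 1; 2; 3; 4; 5], [::]));
  ((13, 2, 2), ([:: 3; 4; 5; 7; 6; 8; 9; 10; 0; 17; 16; 15; 14; 13; 12; 11; 1; 2], [::]));
  ((14, 1, 2), ([:: 0; 8; 7; 6; 5; 4; 3; 2; 1; 9; 10; 11; 12; 13; 14; 15; 17; 16], [::]));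
  ((2, 14, 2), ([:: 13; 15; 17; 0; 2; 4; 6; 7; 9; 11; 12; 14; 16; 8; 10; 18; 1; 3; 5], [:: (7, 1); (2, 2)]));
  ((1, 11, 3), ([:: 0; 2; 4; 12; 10; 8; 6; 14; 15; 13; 11; 9; 1; 3; 5; 7], [::]));
  ((2, 10, 3), ([:: 15; 1; 0; 14; 6; 8; 10; 12; 4; 2; 3; 5; 13; 11; 9; 7], [::]));
  ((3, 9, 3), ([:: 9; 10; 2; 0; 8; 7; 5; 3; 1; 15; 13; 11; 12; 14; 6; 4], [::]));
  ((4, 8, 3), ([:: 14; 13; 5; 7; 9; 1; 15; 0; 2; 4; 3; 11; 12; 10; 8; 6], [::]));
  ((5, 7, 3), ([:: 1; 15; 14; 6; 4; 3; 5; 13; 11; 12; 10; 9; 7; 8; 0; 2], [::]));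
  ((6, 6, 3), ([:: 1; 15; 13; 5; 6; 7; 9; 8; 0; 14; 12; 11; 10; 2; 4; 3], [::]));
  ((7, 5, 3), ([:: 3; 5; 6; 7; 9; 8; 0; 14; 13; 15; 1; 2; 10; 11; 12; 4], [::]));
  ((8, 4, 3), ([:: 5; 6; 7; 8; 0; 2; 10; 9; 11; 12; 4; 3; 1; 15; 14; 13], [::]));
  ((9, 3, 3), ([:: 15; 1; 2; 10; 11; 3; 4; 5; 6; 7; 9; 8; 0; 14; 13; 12], [::]));
  ((10, 2, 3), ([:: 2; 1; 15; 7; 6; 5; 4; 3; 11; 10; 9; 8; 0; 14; 13; 12], [::]));
  ((11, 1, 3), ([:: 2; 1; 9; 10; 8; 0; 15; 14; 13; 12; 11; 3; 4; 5; 6; 7], [::]));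
  ((1, 12, 3), ([:: 0; 2; 4; 6; 5; 13; 15; 7; 9; 11; 3; 1; 16; 14; 12; 10; 8], [:: (2, 2)]));
  ((2, 11, 3), ([:: 6; 4; 12; 14; 16; 1; 10; 8; 7; 9; 11; 13; 5; 3; 2; 0; 15], [:: (3, 1)]));
  ((3, 10, 3), ([:: 15; 14; 12; 4; 6; 8; 10; 1; 16; 0; 2; 3; 5; 13; 11; 9; 7], [:: (3, 1)]));
  ((4, 9, 3), ([:: 12; 11; 10; 8; 16; 14; 6; 4; 2; 3; 5; 7; 9; 1; 0; 15; 13], [:: (1, 1)]));
  ((5, 8, 3), ([:: 4; 3; 2; 11; 13; 12; 14; 15; 0; 9; 7; 5; 6; 8; 10; 1; 16], [:: (4, 1)]));
  ((6, 7, 3), ([:: 9; 8; 10; 12; 13; 11; 2; 1; 3; 4; 5; 7; 15; 0; 16; 14; 6], [:: (5, 1)]));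
  ((7, 6, 3), ([:: 16; 15; 7; 6; 4; 2; 0; 1; 10; 8; 9; 11; 12; 13; 14; 5; 3], [:: (7, 1)]));
  ((8, 5, 3), ([:: 12; 13; 4; 3; 2; 0; 16; 1; 10; 11; 9; 7; 8; 6; 5; 14; 15], [:: (6, 1)]));
  ((9, 4, 3), ([:: 0; 1; 2; 4; 6; 7; 5; 13; 12; 14; 15; 16; 8; 9; 10; 11; 3], [:: (2, 1)]));
  ((10, 3, 3), ([:: 1; 2; 3; 11; 9; 10; 12; 4; 5; 6; 7; 8; 16; 0; 15; 14; 13], [:: (2, 1)]));
  ((11, 2, 3), ([:: 14; 16; 8; 7; 15; 13; 12; 11; 10; 9; 0; 1; 2; 3; 4; 5; 6], [:: (2, 1)]));
  ((12, 1, 3), ([:: 0; 1; 2; 3; 4; 12; 11; 10; 9; 8; 7; 15; 16; 14; 13; 5; 6], [:: (1, 1)]));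
  ((1, 13, 3), ([:: 4; 2; 12; 10; 8; 6; 14; 16; 0; 17; 1; 3; 5; 7; 15; 13; 11; 9], [:: (3, 2)]));
  ((2, 12, 3), ([:: 0; 16; 14; 15; 13; 11; 1; 17; 9; 7; 5; 3; 2; 12; 10; 8; 6; 4], [:: (9, 2); (3, 1)]));
  ((3, 11, 3), ([:: 8; 9; 17; 0; 2; 4; 6; 16; 14; 12; 10; 11; 13; 15; 7; 5; 3; 1], [::]));
  ((4, 10, 3), ([:: 1; 11; 10; 2; 0; 16; 17; 15; 13; 12; 14; 4; 6; 8; 9; 7; 5; 3], [::]));
  ((5, 9, 3), ([:: 4; 5; 15; 14; 12; 2; 3; 1; 17; 16; 0; 10; 8; 6; 7; 9; 11; 13], [::]));
  ((6, 8, 3), ([:: 6; 14; 12; 4; 3; 5; 7; 17; 1; 2; 0; 16; 15; 13; 11; 10; 9; 8], [::]));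
  ((7, 7, 3), ([:: 8; 10; 11; 9; 1; 0; 2; 12; 14; 13; 15; 16; 17; 7; 5; 6; 4; 3], [::]));
  ((8, 6, 3), ([:: 14; 6; 7; 9; 10; 8; 0; 1; 2; 3; 5; 4; 12; 11; 13; 15; 17; 16], [::]));
  ((9, 5, 3), ([:: 9; 7; 5; 13; 12; 2; 3; 4; 6; 8; 10; 11; 1; 0; 17; 16; 15; 14], [::]));
  ((10, 4, 3), ([:: 10; 11; 9; 17; 1; 2; 3; 4; 5; 13; 12; 14; 15; 16; 0; 8; 7; 6], [::]));
  ((11, 3, 3), ([:: 11; 3; 5; 4; 2; 12; 13; 14; 15; 16; 17; 1; 0; 10; 9; 8; 7; 6], [::]));
  ((12, 2, 3), ([:: 9; 17; 1; 0; 16; 8; 7; 6; 5; 4; 3; 2; 10; 11; 12; 13; 14; 15], [::]));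
  ((13, 1, 3), ([:: 1; 0; 2; 12; 11; 10; 9; 8; 7; 17; 16; 15; 14; 13; 3; 4; 5; 6], [::]));
  ((2, 13, 3), ([:: 10; 8; 6; 17; 0; 2; 4; 15; 14; 12; 13; 11; 9; 7; 5; 16; 18; 1; 3], [:: (15, 1); (7, 2)]));
  ((1, 10, 4), ([:: 1; 9; 7; 5; 3; 11; 13; 15; 14; 6; 8; 10; 12; 4; 2; 0], [::]));
  ((2, 9, 4), ([:: 0; 15; 7; 5; 13; 11; 9; 1; 3; 2; 4; 6; 14; 12; 10; 8], [::]));
  ((3, 8, 4), ([:: 5; 13; 12; 14; 6; 4; 2; 3; 1; 15; 7; 9; 11; 10; 8; 0], [::]));
  ((4, 7, 4), ([:: 8; 7; 5; 13; 14; 6; 4; 12; 10; 9; 11; 3; 1; 15; 0; 2], [::]));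
  ((5, 6, 4), ([:: 15; 0; 14; 6; 8; 7; 5; 13; 12; 4; 2; 1; 3; 11; 9; 10], [::]));
  ((6, 5, 4), ([:: 9; 10; 11; 13; 15; 7; 5; 4; 12; 14; 6; 8; 0; 1; 2; 3], [::]));
  ((7, 4, 4), ([:: 8; 10; 9; 1; 3; 11; 12; 4; 2; 0; 15; 14; 13; 5; 6; 7], [::]));
  ((8, 3, 4), ([:: 1; 2; 0; 15; 13; 5; 6; 14; 12; 4; 3; 11; 10; 9; 8; 7], [::]));
  ((9, 2, 4), ([:: 2; 10; 12; 13; 11; 3; 4; 5; 6; 14; 15; 0; 1; 9; 8; 7], [::]));
  ((10, 1, 4), ([:: 1; 9; 11; 10; 2; 3; 4; 12; 13; 14; 15; 0; 8; 7; 6; 5], [::]));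
  ((1, 11, 4), ([:: 7; 5; 13; 15; 14; 12; 10; 8; 16; 1; 3; 11; 9; 0; 2; 4; 6], [:: (2, 2)]));
  ((2, 10, 4), ([:: 16; 14; 12; 4; 6; 8; 10; 1; 2; 3; 11; 9; 7; 5; 13; 15; 0], [:: (3, 1)]));
  ((3, 9, 4), ([:: 0; 1; 9; 8; 6; 4; 2; 10; 12; 14; 16; 15; 7; 5; 3; 11; 13], [:: (1, 1)]));
  ((4, 8, 4), ([:: 9; 11; 12; 10; 8; 16; 14; 5; 6; 7; 15; 13; 4; 2; 0; 1; 3], [:: (6, 1)]));
  ((5, 7, 4), ([:: 16; 14; 5; 3; 4; 6; 7; 8; 9; 0; 15; 13; 11; 2; 1; 10; 12], [:: (7, 1)]));
  ((6, 6, 4), ([:: 0; 2; 3; 4; 12; 10; 11; 9; 7; 15; 14; 13; 5; 6; 8; 16; 1], [:: (3, 1)]));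
  ((7, 5, 4), ([:: 9; 11; 3; 5; 6; 4; 2; 1; 10; 12; 13; 14; 15; 7; 8; 16; 0], [:: (2, 1)]));
  ((8, 4, 4), ([:: 2; 4; 5; 6; 7; 8; 16; 1; 10; 11; 9; 0; 15; 14; 13; 12; 3], [:: (7, 1)]));
  ((9, 3, 4), ([:: 5; 4; 3; 1; 10; 11; 2; 0; 16; 8; 9; 7; 6; 15; 14; 13; 12], [:: (7, 1)]));
  ((10, 2, 4), ([:: 8; 16; 0; 1; 3; 11; 12; 13; 14; 15; 7; 6; 5; 4; 2; 10; 9], [:: (1, 1)]));
  ((11, 1, 4), ([:: 9; 8; 10; 1; 0; 16; 15; 7; 6; 14; 13; 12; 11; 2; 3; 4; 5], [:: (4, 1)]));
  ((1, 12, 4), ([:: 12; 4; 2; 0; 16; 14; 6; 8; 10; 11; 1; 17; 15; 13; 3; 5; 7; 9], [:: (4, 2)]));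
  ((2, 11, 4), ([:: 17; 16; 0; 2; 4; 14; 12; 10; 8; 6; 5; 15; 13; 3; 1; 11; 9; 7], [:: (11, 2); (6, 1)]));
  ((3, 10, 4), ([:: 0; 2; 12; 14; 15; 13; 5; 7; 9; 11; 10; 8; 16; 6; 4; 3; 1; 17], [::]));
  ((4, 9, 4), ([:: 17; 15; 16; 6; 8; 7; 5; 4; 14; 12; 10; 0; 2; 3; 1; 9; 11; 13], [::]));
  ((5, 8, 4), ([:: 10; 0; 2; 3; 5; 15; 13; 12; 11; 9; 1; 17; 16; 14; 4; 6; 8; 7], [::]));
  ((6, 7, 4), ([:: 7; 8; 0; 17; 1; 9; 10; 12; 11; 13; 5; 3; 2; 4; 6; 16; 14; 15], [::]));
  ((7, 6, 4), ([:: 7; 8; 0; 1; 11; 10; 9; 17; 15; 16; 14; 12; 13; 3; 5; 6; 4; 2], [::]));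
  ((8, 5, 4), ([:: 1; 9; 11; 10; 8; 16; 0; 17; 15; 7; 6; 5; 4; 3; 2; 12; 14; 13], [::]));
  ((9, 4, 4), ([:: 10; 9; 17; 1; 3; 11; 12; 2; 4; 5; 6; 7; 8; 0; 16; 15; 14; 13], [::]));
  ((10, 3, 4), ([:: 1; 2; 3; 13; 12; 14; 4; 6; 5; 7; 15; 16; 17; 0; 8; 9; 10; 11], [::]));
  ((11, 2, 4), ([:: 0; 8; 6; 16; 15; 14; 13; 12; 11; 10; 9; 17; 7; 5; 4; 3; 2; 1], [::]));
  ((12, 1, 4), ([:: 15; 5; 6; 14; 4; 3; 2; 1; 0; 16; 17; 7; 8; 9; 10; 11; 12; 13], [::]));
  ((2, 12, 4), ([:: 7; 5; 3; 14; 16; 18; 1; 12; 10; 9; 8; 6; 4; 2; 13; 15; 17; 0; 11], [:: (10, 1); (5, 2)]));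
  ((1, 9, 5), ([:: 3; 1; 15; 13; 5; 7; 9; 11; 10; 2; 0; 8; 6; 14; 12; 4], [::]));
  ((2, 8, 5), ([:: 2; 0; 14; 12; 4; 6; 5; 13; 15; 7; 9; 1; 3; 11; 10; 8], [::]));
  ((3, 7, 5), ([:: 15; 1; 3; 11; 9; 8; 7; 5; 13; 12; 4; 6; 14; 0; 2; 10], [::]));
  ((4, 6, 5), ([:: 14; 12; 13; 11; 3; 1; 9; 10; 2; 4; 6; 5; 7; 15; 0; 8], [::]));
  ((5, 5, 5), ([:: 4; 12; 10; 8; 6; 5; 13; 14; 15; 7; 9; 1; 0; 2; 3; 11], [::]));
  ((6, 4, 5), ([:: 8; 0; 15; 7; 9; 11; 12; 10; 2; 1; 3; 4; 5; 13; 14; 6], [::]));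
  ((7, 3, 5), ([:: 10; 8; 7; 9; 1; 0; 15; 14; 6; 5; 13; 12; 4; 2; 3; 11], [::]));
  ((8, 2, 5), ([:: 6; 14; 15; 0; 2; 1; 9; 10; 11; 3; 4; 12; 13; 5; 7; 8], [::]));
  ((9, 1, 5), ([:: 4; 12; 14; 13; 5; 6; 7; 15; 0; 8; 9; 10; 11; 3; 2; 1], [::]));
  ((1, 10, 5), ([:: 1; 16; 14; 6; 8; 10; 9; 7; 15; 0; 2; 4; 12; 3; 5; 13; 11], [:: (4, 2)]));
  ((2, 9, 5), ([:: 11; 9; 7; 15; 13; 5; 3; 1; 0; 16; 14; 6; 8; 10; 2; 4; 12], [:: (1, 1)]));
  ((3, 8, 5), ([:: 7; 6; 4; 2; 10; 12; 14; 16; 8; 9; 1; 0; 15; 13; 5; 3; 11], [:: (1, 1)]));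
  ((4, 7, 5), ([:: 13; 11; 12; 10; 1; 2; 4; 3; 5; 7; 15; 0; 9; 8; 16; 14; 6], [:: (2, 1)]));
  ((5, 6, 5), ([:: 11; 13; 14; 16; 8; 9; 0; 15; 7; 5; 6; 4; 12; 10; 1; 2; 3], [:: (2, 1)]));
  ((6, 5, 5), ([:: 2; 4; 13; 15; 6; 7; 9; 8; 16; 0; 1; 10; 11; 12; 14; 5; 3], [:: (7, 1)]));
  ((7, 4, 5), ([:: 15; 7; 5; 6; 4; 3; 11; 10; 2; 1; 0; 9; 8; 16; 14; 12; 13], [:: (2, 1)]));
  ((8, 3, 5), ([:: 10; 11; 2; 4; 5; 13; 12; 3; 1; 16; 15; 14; 6; 7; 8; 9; 0], [:: (5, 1)]));
  ((9, 2, 5), ([:: 15; 14; 16; 0; 9; 8; 7; 6; 5; 4; 13; 12; 3; 1; 10; 11; 2], [:: (6, 1)]));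
  ((10, 1, 5), ([:: 0; 1; 10; 11; 2; 3; 4; 12; 13; 5; 6; 7; 9; 8; 16; 15; 14], [:: (4, 1)]));
  ((1, 11, 5), ([:: 11; 1; 3; 5; 7; 9; 17; 15; 13; 12; 4; 2; 0; 10; 8; 6; 14; 16], [:: (2, 2)]));
  ((2, 10, 5), ([:: 14; 6; 5; 3; 13; 11; 9; 7; 15; 17; 1; 0; 16; 8; 10; 12; 2; 4], [:: (6, 1); (4, 2)]));
  ((3, 9, 5), ([:: 0; 2; 3; 4; 12; 10; 8; 6; 16; 14; 15; 5; 7; 9; 17; 1; 11; 13], [::]));
  ((4, 8, 5), ([:: 2; 3; 13; 15; 7; 17; 1; 11; 9; 10; 12; 14; 16; 0; 8; 6; 5; 4], [::]));
  ((5, 7, 5), ([:: 4; 6; 14; 12; 11; 1; 17; 0; 2; 3; 13; 5; 7; 9; 10; 8; 16; 15], [::]));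
  ((6, 6, 5), ([:: 8; 6; 4; 12; 14; 13; 11; 10; 0; 1; 9; 7; 17; 16; 15; 5; 3; 2], [::]));
  ((7, 5, 5), ([:: 11; 9; 8; 7; 17; 1; 3; 2; 0; 10; 12; 4; 5; 13; 14; 15; 16; 6], [::]));
  ((8, 4, 5), ([:: 16; 6; 7; 15; 17; 1; 11; 10; 9; 8; 0; 2; 3; 4; 5; 13; 12; 14], [::]));
  ((9, 3, 5), ([:: 10; 0; 16; 15; 13; 14; 12; 2; 1; 11; 3; 4; 5; 6; 7; 8; 9; 17], [::]));
  ((10, 2, 5), ([:: 3; 2; 0; 17; 7; 6; 8; 16; 15; 5; 4; 14; 13; 12; 11; 10; 9; 1], [::]));
  ((11, 1, 5), ([:: 4; 12; 11; 1; 0; 8; 7; 6; 5; 3; 2; 10; 9; 17; 16; 15; 14; 13], [::]));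
  ((2, 11, 5), ([:: 7; 9; 11; 13; 2; 0; 17; 15; 4; 5; 6; 8; 10; 18; 16; 14; 3; 1; 12], [:: (10, 2); (5, 1)]));
  ((1, 8, 6), ([:: 11; 9; 7; 15; 1; 3; 5; 13; 14; 6; 8; 0; 2; 10; 12; 4], [::]));
  ((2, 7, 6), ([:: 7; 9; 8; 0; 2; 10; 12; 4; 6; 14; 15; 1; 3; 11; 13; 5], [::]));
  ((3, 6, 6), ([:: 6; 4; 12; 13; 14; 0; 8; 10; 2; 3; 11; 9; 1; 15; 7; 5], [::]));
  ((4, 5, 6), ([:: 4; 5; 3; 11; 9; 1; 2; 10; 8; 0; 14; 6; 7; 15; 13; 12], [::]));
  ((5, 4, 6), ([:: 4; 6; 5; 13; 14; 15; 7; 8; 0; 2; 10; 12; 11; 3; 1; 9], [::]));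
  ((6, 3, 6), ([:: 2; 3; 1; 9; 7; 15; 0; 8; 6; 14; 13; 5; 4; 12; 11; 10], [::]));
  ((7, 2, 6), ([:: 0; 2; 1; 9; 8; 10; 11; 3; 4; 12; 13; 5; 6; 14; 15; 7], [::]));
  ((8, 1, 6), ([:: 0; 15; 1; 9; 8; 7; 6; 14; 13; 5; 4; 12; 11; 3; 2; 10], [::]));
  ((1, 9, 6), ([:: 1; 3; 5; 13; 12; 10; 8; 16; 14; 6; 4; 2; 11; 9; 0; 15; 7], [:: (5, 2)]));
  ((2, 8, 6), ([:: 1; 0; 9; 7; 15; 13; 11; 3; 5; 6; 14; 16; 8; 10; 12; 4; 2], [:: (1, 1)]));
  ((3, 7, 6), ([:: 1; 0; 15; 13; 5; 3; 11; 12; 4; 2; 10; 8; 16; 14; 6; 7; 9], [:: (1, 1)]));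
  ((4, 6, 6), ([:: 0; 1; 10; 8; 16; 14; 15; 7; 9; 11; 2; 3; 5; 13; 12; 4; 6], [:: (3, 1)]));
  ((5, 5, 6), ([:: 12; 11; 2; 4; 13; 14; 16; 8; 7; 6; 15; 0; 9; 10; 1; 3; 5], [:: (7, 1)]));
  ((6, 4, 6), ([:: 12; 10; 11; 2; 3; 1; 0; 9; 8; 16; 14; 5; 6; 7; 15; 13; 4], [:: (6, 1)]));
  ((7, 3, 6), ([:: 16; 1; 2; 3; 11; 10; 8; 9; 0; 15; 7; 6; 14; 13; 5; 4; 12], [:: (2, 1)]));
  ((8, 2, 6), ([:: 10; 11; 3; 2; 1; 16; 8; 9; 0; 15; 7; 6; 14; 13; 12; 4; 5], [:: (3, 1)]));
  ((9, 1, 6), ([:: 3; 2; 1; 10; 11; 12; 13; 5; 4; 6; 14; 15; 7; 8; 16; 0; 9], [:: (2, 1)]));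
  ((1, 10, 6), ([:: 13; 15; 17; 9; 11; 1; 3; 5; 7; 6; 4; 14; 12; 2; 0; 10; 8; 16], [:: (5, 2)]));
  ((2, 9, 6), ([:: 5; 4; 2; 0; 10; 12; 14; 6; 8; 16; 17; 9; 7; 15; 13; 11; 1; 3], [:: (5, 1); (2, 2)]));
  ((3, 8, 6), ([:: 3; 2; 12; 11; 13; 5; 7; 9; 1; 17; 15; 14; 4; 6; 16; 0; 8; 10], [::]));
  ((4, 7, 6), ([:: 4; 3; 13; 15; 17; 0; 8; 6; 5; 7; 9; 1; 11; 10; 2; 12; 14; 16], [::]));
  ((5, 6, 6), ([:: 12; 14; 4; 5; 3; 13; 15; 17; 16; 6; 7; 8; 0; 2; 10; 11; 9; 1], [::]));
  ((6, 5, 6), ([:: 4; 3; 1; 0; 10; 2; 12; 14; 15; 7; 8; 6; 5; 13; 11; 9; 17; 16], [::]));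
  ((7, 4, 6), ([:: 17; 16; 0; 10; 12; 2; 4; 5; 6; 7; 8; 9; 1; 11; 3; 13; 15; 14], [::]));
  ((8, 3, 6), ([:: 0; 17; 1; 3; 11; 12; 2; 10; 9; 8; 16; 15; 7; 6; 4; 5; 13; 14], [::]));
  ((9, 2, 6), ([:: 12; 14; 6; 4; 5; 13; 3; 11; 10; 2; 1; 0; 17; 16; 15; 7; 8; 9], [::]));
  ((10, 1, 6), ([:: 16; 6; 8; 7; 17; 0; 1; 9; 10; 11; 3; 2; 12; 13; 14; 15; 5; 4], [::]));
  ((2, 10, 6), ([:: 7; 15; 13; 5; 3; 1; 0; 11; 9; 17; 18; 10; 12; 14; 16; 8; 6; 4; 2], [:: (5, 2); (1, 1)]));
  ((1, 7, 7), ([:: 0; 8; 6; 14; 12; 4; 2; 10; 11; 3; 5; 13; 15; 1; 9; 7], [::]));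
  ((2, 6, 7), ([:: 12; 11; 3; 1; 9; 7; 15; 13; 5; 6; 14; 0; 8; 10; 2; 4], [::]));
  ((3, 5, 7), ([:: 11; 13; 5; 6; 14; 12; 4; 3; 1; 9; 7; 15; 0; 8; 10; 2], [::]));
  ((4, 4, 7), ([:: 9; 1; 2; 0; 8; 10; 12; 4; 3; 11; 13; 5; 6; 14; 15; 7], [::]));
  ((5, 3, 7), ([:: 9; 10; 2; 4; 12; 11; 3; 1; 0; 8; 7; 15; 13; 5; 6; 14], [::]));
  ((6, 2, 7), ([:: 2; 1; 9; 10; 11; 3; 4; 12; 14; 6; 5; 13; 15; 7; 8; 0], [::]));
  ((7, 1, 7), ([:: 9; 10; 2; 1; 3; 11; 12; 4; 5; 13; 14; 6; 7; 15; 0; 8], [::]));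
  ((1, 8, 7), ([:: 9; 7; 15; 0; 2; 11; 10; 1; 16; 8; 6; 4; 13; 5; 3; 12; 14], [:: (5, 2)]));
  ((2, 7, 7), ([:: 10; 1; 16; 8; 6; 4; 12; 14; 13; 5; 3; 2; 11; 9; 0; 15; 7], [:: (3, 1)]));
  ((3, 6, 7), ([:: 0; 2; 11; 12; 3; 1; 10; 8; 16; 14; 6; 5; 4; 13; 15; 7; 9], [:: (5, 1)]));
  ((4, 5, 7), ([:: 8; 7; 15; 16; 14; 6; 4; 12; 10; 2; 1; 0; 9; 11; 3; 5; 13], [:: (1, 1)]));
  ((5, 4, 7), ([:: 13; 5; 7; 8; 16; 1; 10; 9; 0; 15; 14; 6; 4; 3; 12; 11; 2], [:: (4, 1)]));
  ((6, 3, 7), ([:: 5; 6; 7; 15; 14; 12; 3; 4; 13; 11; 2; 1; 10; 8; 16; 0; 9], [:: (6, 1)]));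
  ((7, 2, 7), ([:: 8; 7; 15; 14; 6; 5; 4; 13; 12; 3; 2; 11; 9; 0; 16; 1; 10], [:: (5, 1)]));
  ((8, 1, 7), ([:: 15; 13; 5; 4; 3; 12; 11; 2; 1; 10; 9; 0; 16; 8; 7; 6; 14], [:: (5, 1)]));
  ((1, 9, 7), ([:: 8; 10; 0; 16; 14; 6; 4; 2; 12; 11; 1; 17; 9; 7; 15; 13; 5; 3], [:: (4, 2)]));
  ((2, 8, 7), ([:: 7; 5; 15; 17; 9; 8; 6; 4; 14; 16; 0; 10; 12; 2; 3; 13; 11; 1], [:: (9, 1); (6, 2)]));
  ((3, 7, 7), ([:: 16; 14; 4; 2; 10; 12; 13; 5; 6; 8; 0; 1; 3; 11; 9; 17; 15; 7], [::]));
  ((4, 6, 7), ([:: 3; 2; 0; 8; 7; 15; 5; 13; 14; 16; 6; 4; 12; 10; 11; 9; 17; 1], [::]));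
  ((5, 5, 7), ([:: 10; 8; 9; 17; 0; 16; 6; 14; 15; 7; 5; 13; 12; 2; 4; 3; 1; 11], [::]));
  ((6, 4, 7), ([:: 4; 14; 15; 16; 8; 6; 5; 13; 12; 11; 3; 1; 9; 7; 17; 0; 2; 10], [::]));
  ((7, 3, 7), ([:: 6; 14; 12; 13; 5; 15; 16; 0; 10; 11; 3; 4; 2; 1; 9; 8; 7; 17], [::]));
  ((8, 2, 7), ([:: 14; 4; 2; 12; 11; 10; 0; 17; 16; 15; 5; 13; 3; 1; 9; 8; 7; 6], [::]));
  ((9, 1, 7), ([:: 17; 15; 7; 6; 5; 13; 14; 4; 12; 11; 3; 2; 1; 0; 10; 9; 8; 16], [::]));
  ((2, 9, 7), ([:: 16; 8; 6; 4; 3; 14; 12; 1; 18; 10; 11; 0; 2; 13; 15; 17; 9; 7; 5], [:: (6, 2); (4, 1)]));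
  ((1, 6, 8), ([:: 8; 0; 2; 10; 12; 4; 6; 14; 13; 5; 7; 15; 1; 9; 11; 3], [::]));
  ((2, 5, 8), ([:: 14; 6; 5; 13; 15; 7; 9; 1; 3; 11; 12; 4; 2; 10; 8; 0], [::]));
  ((3, 4, 8), ([:: 14; 6; 8; 0; 2; 10; 11; 3; 4; 12; 13; 5; 7; 15; 1; 9], [::]));
  ((4, 3, 8), ([:: 7; 15; 0; 8; 10; 2; 1; 9; 11; 3; 4; 12; 14; 6; 5; 13], [::]));
  ((5, 2, 8), ([:: 11; 3; 2; 10; 12; 4; 5; 13; 14; 6; 7; 15; 1; 9; 8; 0], [::]));
  ((6, 1, 8), ([:: 7; 15; 0; 8; 9; 1; 2; 10; 11; 3; 4; 12; 14; 6; 5; 13], [::]));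
  ((1, 7, 8), ([:: 10; 8; 0; 9; 7; 6; 15; 13; 5; 14; 16; 1; 3; 11; 2; 4; 12], [::]));
  ((2, 6, 8), ([:: 1; 10; 9; 7; 6; 4; 2; 11; 3; 12; 14; 5; 13; 15; 0; 8; 16], [::]));
  ((3, 5, 8), ([:: 12; 11; 10; 9; 1; 3; 5; 14; 6; 4; 13; 15; 7; 16; 8; 0; 2], [::]));
  ((4, 4, 8), ([:: 8; 16; 15; 13; 12; 4; 5; 14; 6; 7; 9; 0; 2; 10; 1; 3; 11], [::]));
  ((5, 3, 8), ([:: 7; 9; 10; 1; 16; 0; 8; 6; 15; 14; 13; 5; 4; 12; 3; 11; 2], [::]));
  ((6, 2, 8), ([:: 11; 3; 4; 2; 10; 9; 1; 0; 8; 7; 16; 15; 6; 14; 12; 13; 5], [::]));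
  ((7, 1, 8), ([:: 6; 4; 3; 12; 13; 5; 14; 15; 7; 8; 16; 0; 9; 1; 2; 10; 11], [::]));
  ((1, 8, 8), ([:: 15; 7; 5; 3; 13; 11; 1; 17; 9; 8; 16; 14; 6; 4; 2; 12; 10; 0], [:: (6, 2)]));
  ((2, 7, 8), ([:: 3; 5; 13; 14; 12; 4; 6; 8; 16; 0; 10; 2; 1; 11; 9; 17; 15; 7], [:: (2, 1)]));
  ((3, 6, 8), ([:: 2; 1; 11; 9; 10; 0; 16; 8; 6; 14; 12; 4; 3; 13; 5; 7; 15; 17], [:: (4, 1)]));
  ((4, 5, 8), ([:: 13; 12; 2; 4; 14; 6; 5; 3; 1; 11; 10; 0; 16; 8; 9; 17; 15; 7], [:: (6, 1)]));
  ((5, 4, 8), ([:: 9; 10; 8; 16; 14; 6; 7; 15; 13; 5; 4; 12; 2; 3; 11; 1; 17; 0], [:: (3, 1)]));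
  ((6, 3, 8), ([:: 6; 8; 16; 17; 9; 7; 15; 14; 12; 13; 5; 4; 3; 11; 1; 2; 10; 0], [:: (2, 1)]));
  ((7, 2, 8), ([:: 14; 13; 3; 4; 2; 12; 11; 1; 0; 10; 9; 17; 16; 8; 6; 5; 15; 7], [:: (6, 1)]));
  ((8, 1, 8), ([:: 5; 4; 3; 13; 12; 2; 1; 11; 10; 0; 17; 9; 8; 16; 14; 6; 7; 15], [:: (5, 1)]));
  ((1, 9, 8), ([:: 3; 1; 12; 14; 16; 8; 6; 4; 2; 13; 5; 7; 15; 17; 9; 11; 0; 18; 10], [:: (3, 2)]));
  ((2, 8, 8), ([:: 5; 7; 15; 17; 9; 11; 0; 2; 13; 14; 3; 4; 6; 8; 16; 18; 10; 12; 1], [:: (7, 2); (4, 1)]));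
  ((3, 7, 8), ([:: 9; 11; 12; 10; 8; 6; 17; 18; 7; 15; 4; 2; 13; 5; 16; 14; 3; 1; 0], [::]));
  ((4, 6, 8), ([:: 14; 12; 10; 11; 9; 17; 6; 5; 16; 8; 0; 18; 7; 15; 13; 2; 4; 3; 1], [::]));
  ((5, 5, 8), ([:: 15; 14; 16; 17; 18; 0; 11; 3; 5; 13; 2; 10; 8; 6; 7; 9; 1; 12; 4], [::]));
  ((6, 4, 8), ([:: 15; 17; 18; 1; 3; 2; 10; 9; 7; 6; 14; 13; 5; 16; 8; 0; 11; 12; 4], [::]));
  ((7, 3, 8), ([:: 9; 10; 12; 13; 15; 4; 5; 16; 14; 6; 17; 18; 7; 8; 0; 11; 3; 2; 1], [::]));
  ((8, 2, 8), ([:: 2; 3; 11; 10; 12; 4; 6; 17; 16; 8; 9; 1; 0; 18; 7; 15; 14; 13; 5], [::]));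
  ((9, 1, 8), ([:: 10; 18; 7; 5; 4; 15; 16; 17; 6; 14; 13; 12; 11; 0; 8; 9; 1; 2; 3], [::]));
  ((2, 9, 8), ([:: 4; 16; 14; 2; 1; 13; 15; 3; 5; 17; 19; 11; 9; 7; 6; 18; 0; 12; 10; 8], [:: (10, 2); (7, 1)]));
  ((1, 6, 9), ([:: 11; 13; 15; 7; 9; 1; 10; 2; 4; 12; 3; 5; 14; 6; 8; 16; 0], [::]));
  ((2, 5, 9), ([:: 4; 13; 12; 14; 16; 8; 10; 1; 9; 0; 2; 11; 3; 5; 6; 15; 7], [::]));
  ((3, 4, 9), ([:: 4; 3; 11; 13; 5; 7; 15; 16; 8; 0; 9; 1; 2; 10; 12; 14; 6], [::]));
  ((4, 3, 9), ([:: 2; 1; 9; 8; 10; 12; 4; 3; 11; 13; 5; 14; 6; 15; 7; 16; 0], [::]));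
  ((5, 2, 9), ([:: 1; 16; 0; 2; 10; 9; 8; 7; 15; 6; 14; 5; 13; 4; 12; 11; 3], [::]));
  ((6, 1, 9), ([:: 15; 0; 1; 9; 8; 16; 7; 6; 14; 5; 4; 13; 12; 3; 11; 10; 2], [::]));
  ((1, 7, 9), ([:: 2; 12; 10; 8; 0; 16; 6; 4; 14; 13; 11; 3; 5; 15; 7; 17; 1; 9], [::]));
  ((2, 6, 9), ([:: 11; 1; 17; 16; 0; 2; 10; 12; 4; 14; 6; 8; 9; 7; 15; 5; 13; 3], [::]));
  ((3, 5, 9), ([:: 4; 14; 12; 2; 10; 9; 8; 6; 16; 0; 1; 11; 3; 13; 15; 5; 7; 17], [::]));
  ((4, 4, 9), ([:: 10; 11; 13; 3; 1; 9; 8; 16; 0; 17; 7; 15; 5; 6; 14; 4; 2; 12], [::]));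
  ((5, 3, 9), ([:: 7; 8; 6; 5; 3; 11; 1; 9; 17; 0; 10; 2; 12; 4; 14; 13; 15; 16], [::]));
  ((6, 2, 9), ([:: 9; 7; 6; 5; 13; 3; 11; 12; 4; 14; 15; 17; 16; 8; 0; 10; 2; 1], [::]));
  ((7, 1, 9), ([:: 14; 15; 13; 3; 11; 10; 0; 1; 2; 12; 4; 5; 6; 16; 8; 7; 17; 9], [::]));
  ((1, 8, 9), ([:: 13; 12; 1; 18; 10; 8; 16; 5; 7; 15; 17; 9; 11; 0; 2; 4; 6; 14; 3], [:: (6, 2)]));
  ((2, 7, 9), ([:: 11; 0; 17; 9; 7; 6; 4; 15; 13; 2; 1; 12; 14; 3; 5; 16; 8; 10; 18], [:: (7, 1)]));
  ((3, 6, 9), ([:: 13; 14; 12; 1; 18; 10; 8; 16; 5; 3; 4; 15; 7; 6; 17; 9; 11; 0; 2], [:: (7, 1)]));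
  ((4, 5, 9), ([:: 12; 1; 3; 4; 6; 14; 16; 8; 9; 17; 18; 10; 11; 0; 2; 13; 5; 7; 15], [:: (4, 1)]));
  ((5, 4, 9), ([:: 16; 15; 17; 9; 8; 7; 5; 13; 2; 0; 11; 10; 18; 1; 12; 4; 3; 14; 6], [:: (4, 1)]));
  ((6, 3, 9), ([:: 7; 6; 5; 16; 8; 10; 18; 0; 11; 9; 17; 15; 4; 3; 14; 13; 2; 1; 12], [:: (7, 1)]));
  ((7, 2, 9), ([:: 6; 7; 15; 14; 3; 4; 5; 16; 8; 9; 17; 0; 11; 10; 18; 1; 12; 13; 2], [:: (7, 1)]));
  ((8, 1, 9), ([:: 18; 0; 11; 10; 12; 1; 2; 13; 5; 4; 3; 14; 6; 7; 15; 16; 8; 9; 17], [:: (4, 1)]));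
  ((1, 9, 9), ([:: 16; 8; 6; 4; 2; 14; 12; 0; 18; 10; 9; 17; 19; 11; 13; 1; 3; 15; 7; 5], [:: (6, 2)]));
  ((2, 8, 9), ([:: 3; 1; 13; 5; 4; 2; 0; 12; 14; 6; 8; 16; 18; 10; 11; 19; 17; 9; 7; 15], [:: (5, 1); (2, 2)]));
  ((3, 7, 9), ([:: 1; 0; 2; 3; 5; 17; 19; 11; 9; 7; 15; 13; 12; 4; 16; 8; 10; 18; 6; 14], [::]));
  ((4, 6, 9), ([:: 10; 2; 3; 4; 5; 17; 9; 1; 19; 11; 13; 15; 7; 8; 16; 14; 12; 0; 18; 6], [::]));
  ((5, 5, 9), ([:: 6; 18; 19; 17; 5; 7; 9; 1; 13; 15; 14; 12; 0; 8; 16; 4; 3; 2; 10; 11], [::]));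
  ((6, 4, 9), ([:: 17; 19; 1; 0; 18; 10; 11; 9; 8; 16; 4; 12; 13; 5; 6; 14; 2; 3; 15; 7], [::]));
  ((7, 3, 9), ([:: 9; 10; 18; 6; 4; 12; 11; 13; 14; 2; 1; 0; 19; 7; 15; 3; 5; 17; 16; 8], [::]));
  ((8, 2, 9), ([:: 7; 8; 6; 5; 3; 2; 14; 13; 1; 9; 17; 18; 10; 11; 19; 0; 12; 4; 16; 15], [::]));
  ((9, 1, 9), ([:: 17; 9; 11; 10; 18; 6; 5; 13; 12; 4; 16; 8; 7; 19; 0; 1; 2; 3; 15; 14], [::]));
  ((2, 9, 9), ([:: 14; 1; 3; 4; 6; 8; 16; 18; 10; 12; 20; 19; 11; 9; 17; 15; 7; 5; 13; 0; 2], [:: (4, 1); (2, 2)]));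
  ((1, 6, 10), ([:: 2; 10; 12; 14; 16; 0; 8; 6; 4; 3; 11; 1; 9; 17; 7; 15; 5; 13], [::]));
  ((2, 5, 10), ([:: 17; 7; 5; 15; 14; 4; 2; 12; 10; 0; 16; 6; 8; 9; 1; 11; 3; 13], [::]));
  ((3, 4, 10), ([:: 15; 14; 6; 7; 17; 9; 1; 11; 13; 5; 3; 4; 2; 12; 10; 0; 8; 16], [::]));
  ((4, 3, 10), ([:: 6; 14; 15; 16; 17; 9; 11; 1; 3; 13; 5; 7; 8; 0; 10; 2; 12; 4], [::]));
  ((5, 2, 10), ([:: 15; 7; 5; 4; 3; 13; 12; 14; 6; 16; 8; 0; 17; 9; 1; 11; 10; 2], [::]));
  ((6, 1, 10), ([:: 10; 11; 13; 5; 15; 16; 8; 0; 1; 9; 17; 7; 6; 14; 4; 3; 2; 12], [::]));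
  ((1, 7, 10), ([:: 2; 10; 12; 14; 3; 1; 0; 8; 6; 17; 9; 11; 13; 5; 16; 18; 7; 15; 4], [::]));
  ((2, 6, 10), ([:: 10; 11; 3; 5; 7; 15; 13; 14; 6; 17; 9; 1; 12; 4; 2; 0; 8; 16; 18], [::]));
  ((3, 5, 10), ([:: 1; 18; 16; 17; 15; 7; 5; 13; 2; 10; 9; 8; 0; 11; 3; 14; 6; 4; 12], [::]));
  ((4, 4, 10), ([:: 10; 12; 11; 0; 8; 9; 17; 18; 7; 15; 4; 6; 14; 16; 5; 13; 2; 3; 1], [::]));
  ((5, 3, 10), ([:: 3; 2; 0; 18; 1; 9; 17; 6; 14; 13; 5; 16; 8; 7; 15; 4; 12; 10; 11], [::]));
  ((6, 2, 10), ([:: 8; 16; 17; 9; 1; 18; 0; 11; 12; 4; 5; 13; 15; 7; 6; 14; 3; 2; 10], [::]));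
  ((7, 1, 10), ([:: 0; 2; 10; 9; 1; 12; 11; 3; 14; 13; 5; 4; 15; 16; 8; 7; 18; 17; 6], [::]));
  ((1, 8, 10), ([:: 13; 15; 7; 5; 17; 9; 11; 19; 1; 3; 4; 16; 8; 6; 18; 10; 12; 0; 2; 14], [:: (7, 2)]));
  ((2, 7, 10), ([:: 16; 15; 7; 9; 17; 19; 11; 3; 5; 13; 1; 2; 4; 12; 0; 18; 10; 8; 6; 14], [:: (2, 1)]));
  ((3, 6, 10), ([:: 2; 3; 4; 12; 0; 18; 10; 8; 16; 14; 6; 5; 13; 1; 19; 11; 9; 17; 15; 7], [:: (3, 1)]));
  ((4, 5, 10), ([:: 2; 10; 9; 1; 0; 12; 4; 6; 14; 13; 5; 3; 11; 19; 17; 15; 7; 8; 16; 18], [:: (1, 1)]));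
  ((5, 4, 10), ([:: 16; 8; 6; 14; 12; 0; 1; 2; 10; 18; 19; 11; 3; 4; 5; 13; 15; 7; 9; 17], [:: (1, 1)]));
  ((6, 3, 10), ([:: 18; 17; 19; 11; 3; 2; 10; 9; 1; 0; 12; 4; 5; 13; 15; 7; 8; 16; 14; 6], [:: (1, 1)]));
  ((7, 2, 10), ([:: 4; 12; 10; 18; 0; 19; 11; 3; 2; 1; 13; 5; 6; 14; 15; 7; 8; 16; 17; 9], [:: (2, 1)]));
  ((8, 1, 10), ([:: 19; 18; 17; 9; 10; 11; 12; 0; 1; 13; 5; 4; 16; 8; 6; 14; 2; 3; 15; 7], [:: (5, 1)]));
  ((1, 9, 10), ([:: 2; 4; 6; 7; 15; 17; 9; 11; 19; 0; 13; 5; 3; 16; 8; 10; 18; 20; 12; 14; 1], [:: (4, 2)]));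
  ((2, 8, 10), ([:: 19; 11; 9; 17; 4; 6; 7; 15; 13; 0; 2; 1; 14; 12; 20; 18; 10; 8; 16; 3; 5], [:: (7, 1); (5, 2)]));
  ((3, 7, 10), ([:: 10; 8; 9; 11; 13; 0; 20; 12; 4; 17; 19; 6; 14; 16; 3; 1; 2; 15; 7; 5; 18], [::]));
  ((4, 6, 10), ([:: 9; 17; 16; 18; 5; 3; 4; 6; 7; 15; 2; 10; 8; 0; 13; 11; 19; 20; 12; 14; 1], [::]));
  ((5, 5, 10), ([:: 12; 14; 16; 8; 9; 11; 3; 5; 13; 0; 1; 20; 19; 6; 7; 15; 2; 10; 18; 17; 4], [::]));
  ((6, 4, 10), ([:: 4; 17; 16; 8; 6; 19; 0; 1; 20; 7; 15; 2; 3; 11; 12; 14; 13; 5; 18; 10; 9], [::]));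
  ((7, 3, 10), ([:: 11; 10; 12; 13; 15; 7; 8; 0; 20; 19; 6; 14; 1; 9; 17; 4; 5; 18; 16; 3; 2], [::]));
  ((8, 2, 10), ([:: 2; 3; 16; 8; 0; 1; 14; 15; 7; 9; 17; 4; 6; 5; 13; 12; 20; 19; 18; 10; 11], [::]));
  ((9, 1, 10), ([:: 5; 6; 7; 15; 17; 9; 8; 16; 3; 4; 12; 11; 19; 18; 10; 2; 1; 14; 13; 0; 20], [::]));
  ((2, 9, 10), ([:: 15; 1; 21; 19; 11; 13; 12; 20; 18; 10; 8; 16; 2; 0; 14; 6; 4; 3; 17; 9; 7; 5], [:: (6, 2); (4, 1)]));
  ((1, 6, 11), ([:: 4; 12; 13; 5; 7; 15; 17; 9; 1; 18; 16; 8; 6; 14; 3; 11; 0; 2; 10], [:: (10, 8)]));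
  ((2, 5, 11), ([:: 8; 16; 18; 0; 17; 9; 1; 3; 11; 10; 2; 13; 5; 7; 15; 4; 12; 14; 6], [:: (9, 8)]));
  ((3, 4, 11), ([:: 16; 8; 0; 17; 15; 7; 18; 10; 2; 1; 9; 11; 3; 4; 12; 14; 6; 5; 13], [:: (9, 8)]));
  ((4, 3, 11), ([:: 2; 10; 18; 7; 15; 4; 12; 11; 3; 5; 13; 14; 6; 8; 16; 17; 0; 1; 9], [:: (9, 8)]));
  ((5, 2, 11), ([:: 4; 12; 1; 18; 10; 9; 17; 0; 11; 3; 2; 13; 5; 6; 14; 15; 7; 8; 16], [:: (11, 8)]));
  ((6, 1, 11), ([:: 3; 11; 10; 2; 1; 9; 17; 16; 8; 0; 18; 7; 15; 14; 6; 4; 12; 13; 5], [:: (8, 8)]));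
  ((1, 7, 11), ([:: 14; 6; 18; 0; 2; 10; 12; 4; 16; 8; 7; 15; 13; 5; 17; 19; 1; 9; 11; 3], [:: (9, 8)]));
  ((2, 6, 11), ([:: 7; 15; 3; 11; 10; 2; 0; 18; 16; 8; 6; 14; 12; 4; 5; 13; 1; 9; 17; 19], [:: (10, 8)]));
  ((3, 5, 11), ([:: 12; 4; 3; 11; 13; 5; 7; 15; 16; 8; 6; 14; 2; 10; 18; 0; 1; 9; 17; 19], [:: (10, 8)]));
  ((4, 4, 11), ([:: 4; 12; 14; 6; 7; 15; 13; 5; 17; 9; 11; 19; 18; 10; 2; 3; 1; 0; 8; 16], [:: (12, 8)]));
  ((5, 3, 11), ([:: 10; 2; 1; 9; 11; 3; 4; 12; 13; 5; 17; 19; 0; 8; 16; 18; 6; 14; 15; 7], [:: (8, 8)]));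
  ((6, 2, 11), ([:: 5; 13; 14; 6; 7; 15; 3; 11; 19; 18; 0; 8; 9; 1; 2; 10; 12; 4; 16; 17], [:: (8, 8)]));
  ((7, 1, 11), ([:: 1; 0; 12; 4; 5; 13; 15; 7; 8; 16; 17; 9; 10; 18; 19; 11; 3; 2; 14; 6], [:: (11, 8)]));
  ((1, 8, 11), ([:: 17; 9; 7; 15; 13; 5; 3; 16; 8; 6; 14; 1; 20; 12; 4; 2; 0; 19; 11; 10; 18], [:: (12, 8); (4, 2)]));
  ((2, 7, 11), ([:: 13; 5; 3; 11; 19; 20; 1; 9; 17; 15; 7; 6; 14; 12; 4; 2; 0; 8; 16; 18; 10], [:: (20, 1); (11, 8)]));
  ((3, 6, 11), ([:: 6; 14; 12; 4; 3; 11; 13; 5; 7; 15; 17; 9; 1; 20; 19; 18; 10; 2; 0; 8; 16], [:: (20, 1); (11, 8)]));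
  ((4, 5, 11), ([:: 5; 13; 14; 6; 4; 12; 11; 3; 1; 9; 17; 15; 7; 20; 19; 18; 16; 8; 0; 2; 10], [:: (20, 1); (10, 8)]));
  ((5, 4, 11), ([:: 19; 18; 10; 2; 4; 12; 20; 0; 1; 9; 17; 16; 8; 6; 14; 15; 7; 5; 13; 11; 3], [:: (11, 8); (1, 1)]));
  ((6, 3, 11), ([:: 9; 17; 18; 10; 2; 0; 1; 3; 11; 19; 20; 7; 15; 16; 8; 6; 14; 13; 5; 4; 12], [:: (20, 1); (12, 8)]));
  ((7, 2, 11), ([:: 15; 7; 5; 13; 14; 6; 4; 12; 11; 3; 2; 10; 18; 19; 20; 0; 8; 16; 17; 9; 1], [:: (19, 1); (8, 8)]));
  ((8, 1, 11), ([:: 4; 5; 13; 0; 20; 12; 11; 19; 18; 10; 9; 17; 16; 8; 7; 15; 2; 3; 1; 14; 6], [:: (13, 8); (5, 1)]));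
  ((1, 9, 11), ([:: 0; 8; 16; 14; 6; 20; 18; 10; 2; 4; 12; 13; 5; 7; 15; 17; 19; 21; 1; 9; 11; 3], [:: (20, 2); (8, 8)]));
  ((2, 8, 11), ([:: 18; 16; 8; 0; 20; 19; 17; 9; 1; 21; 7; 15; 13; 5; 3; 11; 10; 2; 4; 12; 14; 6], [:: (20, 1); (18, 2); (10, 8)]));
  ((3, 7, 11), ([:: 9; 17; 15; 7; 5; 13; 11; 3; 1; 21; 0; 8; 16; 2; 4; 12; 14; 6; 20; 19; 18; 10], [:: (11, 8)]));
  ((4, 6, 11), ([:: 20; 6; 14; 0; 2; 10; 18; 19; 21; 1; 3; 11; 12; 4; 5; 13; 15; 7; 9; 17; 16; 8], [:: (10, 8)]));
  ((5, 5, 11), ([:: 19; 20; 0; 8; 16; 18; 10; 9; 17; 3; 11; 12; 4; 6; 14; 15; 7; 5; 13; 21; 1; 2], [:: (11, 8)]));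
  ((6, 4, 11), ([:: 5; 13; 11; 3; 4; 12; 10; 2; 1; 21; 20; 6; 14; 0; 8; 16; 15; 7; 9; 17; 18; 19], [:: (10, 8)]));
  ((7, 3, 11), ([:: 15; 7; 5; 13; 21; 19; 20; 6; 14; 16; 17; 18; 4; 12; 11; 3; 2; 10; 9; 1; 0; 8], [:: (8, 8)]));
  ((8, 2, 11), ([:: 2; 10; 18; 16; 8; 7; 15; 14; 6; 5; 4; 3; 11; 19; 17; 9; 1; 0; 21; 13; 12; 20], [:: (14, 8)]));
  ((9, 1, 11), ([:: 20; 21; 7; 15; 16; 8; 6; 14; 0; 1; 2; 10; 11; 3; 4; 12; 13; 5; 19; 18; 17; 9], [:: (10, 8)]));
  ((2, 9, 11), ([:: 20; 18; 16; 8; 0; 2; 10; 12; 4; 6; 14; 15; 7; 22; 21; 19; 17; 9; 1; 3; 11; 13; 5], [:: (22, 1); (20, 2); (8, 8)]));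
  ((1, 6, 12), ([:: 7; 15; 13; 5; 3; 1; 9; 17; 19; 11; 10; 18; 6; 14; 16; 8; 0; 12; 4; 2], [:: (12, 8)]));
  ((2, 5, 12), ([:: 17; 5; 13; 1; 9; 8; 0; 18; 16; 14; 6; 4; 12; 10; 2; 3; 11; 19; 7; 15], [:: (8, 8)]));
  ((3, 4, 12), ([:: 13; 5; 6; 14; 2; 1; 19; 11; 3; 15; 7; 9; 17; 16; 8; 10; 18; 0; 12; 4], [:: (12, 8)]));
  ((4, 3, 12), ([:: 1; 9; 11; 3; 2; 10; 18; 6; 14; 15; 7; 5; 13; 12; 4; 16; 8; 0; 19; 17], [:: (8, 8)]));
  ((5, 2, 12), ([:: 7; 15; 13; 5; 6; 14; 16; 8; 0; 12; 4; 3; 11; 19; 18; 17; 9; 1; 2; 10], [:: (10, 8)]));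
  ((6, 1, 12), ([:: 12; 4; 2; 3; 11; 19; 0; 1; 13; 5; 17; 9; 10; 18; 6; 14; 15; 7; 8; 16], [:: (12, 8)]));
  ((1, 7, 12), ([:: 3; 4; 12; 20; 1; 14; 6; 8; 16; 18; 10; 2; 0; 13; 5; 7; 15; 17; 9; 11; 19], [:: (12, 8)]));
  ((2, 6, 12), ([:: 4; 12; 20; 18; 10; 9; 17; 19; 11; 3; 1; 14; 6; 8; 16; 15; 7; 5; 13; 0; 2], [:: (13, 8)]));
  ((3, 5, 12), ([:: 19; 18; 10; 9; 17; 4; 12; 14; 6; 5; 13; 11; 3; 1; 20; 7; 15; 2; 0; 8; 16], [:: (11, 8)]));
  ((4, 4, 12), ([:: 8; 16; 14; 6; 4; 12; 13; 5; 18; 10; 9; 17; 19; 11; 3; 1; 2; 15; 7; 20; 0], [:: (12, 8)]));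
  ((5, 3, 12), ([:: 10; 2; 15; 7; 5; 13; 0; 8; 9; 1; 14; 6; 4; 12; 11; 3; 16; 17; 18; 20; 19], [:: (8, 8)]));
  ((6, 2, 12), ([:: 4; 12; 13; 5; 6; 14; 16; 3; 11; 19; 17; 18; 10; 2; 1; 9; 8; 0; 20; 7; 15], [:: (8, 8)]));
  ((7, 1, 12), ([:: 4; 5; 13; 14; 6; 19; 11; 3; 16; 8; 7; 15; 2; 1; 0; 20; 12; 10; 18; 17; 9], [:: (13, 8)]));
  ((1, 8, 12), ([:: 6; 14; 0; 2; 4; 12; 20; 18; 10; 8; 16; 15; 7; 5; 13; 21; 1; 3; 11; 19; 17; 9], [:: (13, 8); (3, 2)]));
  ((2, 7, 12), ([:: 20; 19; 17; 9; 1; 21; 7; 15; 13; 5; 3; 11; 12; 4; 6; 14; 16; 8; 0; 2; 10; 18], [:: (20, 1); (10, 8)]));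
  ((3, 6, 12), ([:: 7; 15; 14; 6; 5; 19; 11; 13; 21; 1; 3; 17; 9; 8; 16; 2; 4; 18; 10; 12; 20; 0], [:: (14, 8); (6, 1)]));
  ((4, 5, 12), ([:: 14; 6; 7; 15; 1; 21; 13; 5; 4; 3; 17; 9; 11; 19; 18; 10; 12; 20; 0; 2; 16; 8], [:: (14, 8); (5, 1)]));
  ((5, 4, 12), ([:: 1; 15; 7; 6; 14; 16; 8; 10; 18; 4; 5; 13; 21; 0; 2; 3; 17; 9; 11; 19; 20; 12], [:: (13, 8); (5, 1)]));
  ((6, 3, 12), ([:: 6; 14; 12; 4; 5; 13; 21; 0; 1; 9; 17; 15; 7; 8; 16; 18; 10; 2; 3; 11; 19; 20], [:: (10, 8); (1, 1)]));
  ((7, 2, 12), ([:: 19; 20; 21; 7; 15; 13; 5; 4; 12; 11; 3; 2; 10; 18; 17; 9; 1; 0; 8; 16; 14; 6], [:: (20, 1); (8, 8)]));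
  ((8, 1, 12), ([:: 0; 21; 1; 15; 7; 6; 14; 13; 5; 4; 12; 20; 19; 11; 3; 2; 16; 8; 9; 17; 18; 10], [:: (12, 8); (3, 1)]));
  ((1, 9, 12), ([:: 14; 22; 20; 12; 10; 18; 3; 5; 7; 15; 0; 1; 16; 8; 6; 4; 2; 17; 9; 11; 19; 21; 13], [:: (15, 8); (6, 2)]));
  ((2, 8, 12), ([:: 8; 16; 1; 3; 5; 6; 14; 22; 20; 12; 10; 18; 19; 11; 13; 21; 0; 15; 7; 9; 17; 2; 4], [:: (14, 8); (6, 1); (3, 2)]));
  ((3, 7, 12), ([:: 12; 4; 19; 20; 22; 14; 6; 21; 0; 8; 16; 18; 17; 15; 7; 5; 13; 11; 3; 1; 9; 10; 2], [:: (8, 8)]));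
  ((4, 6, 12), ([:: 1; 9; 11; 3; 18; 17; 19; 21; 0; 8; 16; 15; 7; 6; 14; 22; 20; 5; 13; 12; 4; 2; 10], [:: (9, 8)]));
  ((5, 5, 12), ([:: 21; 22; 14; 6; 4; 12; 20; 19; 17; 9; 10; 18; 3; 11; 13; 5; 7; 15; 16; 8; 0; 2; 1], [:: (11, 8)]));
  ((6, 4, 12), ([:: 0; 15; 7; 6; 14; 12; 4; 5; 13; 21; 22; 20; 19; 17; 18; 10; 2; 3; 11; 9; 1; 16; 8], [:: (9, 8)]));
  ((7, 3, 12), ([:: 18; 16; 8; 6; 14; 13; 5; 4; 12; 20; 21; 22; 7; 15; 0; 1; 9; 10; 2; 3; 11; 19; 17], [:: (9, 8)]));
  ((8, 2, 12), ([:: 7; 15; 14; 6; 21; 13; 11; 19; 20; 12; 4; 5; 3; 2; 10; 18; 17; 9; 8; 16; 1; 0; 22], [:: (14, 8)]));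
  ((9, 1, 12), ([:: 3; 11; 9; 1; 2; 10; 18; 19; 20; 12; 4; 5; 13; 14; 6; 21; 22; 0; 15; 7; 8; 16; 17], [:: (9, 8)]));
  ((2, 9, 12), ([:: 22; 21; 19; 17; 9; 1; 23; 7; 15; 13; 5; 3; 11; 12; 4; 6; 14; 16; 8; 0; 2; 10; 18; 20], [:: (22, 1); (19, 2); (11, 8)]));
  ((1, 6, 13), ([:: 2; 15; 7; 5; 13; 0; 19; 11; 3; 1; 14; 6; 4; 17; 9; 8; 16; 18; 10; 12; 20], [:: (13, 8)]));
  ((2, 5, 13), ([:: 12; 4; 6; 14; 16; 8; 9; 17; 15; 7; 20; 1; 2; 10; 18; 5; 13; 0; 19; 11; 3], [:: (10, 8)]));
  ((3, 4, 13), ([:: 15; 7; 8; 16; 18; 10; 2; 4; 12; 20; 0; 13; 5; 6; 14; 1; 3; 11; 19; 17; 9], [:: (13, 8)]));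
  ((4, 3, 13), ([:: 2; 10; 18; 17; 9; 8; 16; 3; 11; 19; 6; 14; 12; 4; 5; 13; 15; 7; 20; 1; 0], [:: (10, 8)]));
  ((5, 2, 13), ([:: 19; 11; 9; 17; 18; 10; 2; 3; 16; 8; 0; 20; 12; 4; 5; 13; 15; 7; 6; 14; 1], [:: (12, 8)]));
  ((6, 1, 13), ([:: 2; 4; 12; 13; 5; 6; 14; 15; 7; 20; 19; 11; 3; 16; 8; 0; 1; 9; 17; 18; 10], [:: (12, 8)]));
  ((1, 7, 13), ([:: 5; 13; 21; 19; 11; 3; 1; 9; 17; 15; 7; 6; 14; 16; 18; 10; 2; 4; 12; 20; 0; 8], [:: (8, 8)]));
  ((2, 6, 13), ([:: 7; 15; 17; 9; 10; 18; 20; 12; 4; 2; 16; 8; 6; 14; 0; 1; 21; 13; 5; 3; 11; 19], [:: (11, 8)]));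
  ((3, 5, 13), ([:: 9; 17; 19; 11; 10; 18; 20; 21; 13; 5; 3; 1; 15; 7; 6; 14; 0; 8; 16; 2; 4; 12], [:: (12, 8)]));
  ((4, 4, 13), ([:: 0; 14; 6; 5; 13; 21; 20; 12; 4; 18; 10; 8; 16; 15; 7; 9; 17; 19; 11; 3; 1; 2], [:: (13, 8)]));
  ((5, 3, 13), ([:: 20; 12; 4; 2; 3; 11; 13; 5; 19; 18; 10; 8; 16; 17; 9; 1; 15; 7; 6; 14; 0; 21], [:: (11, 8)]));
  ((6, 2, 13), ([:: 8; 16; 2; 3; 11; 13; 5; 4; 12; 20; 6; 14; 15; 7; 21; 0; 1; 9; 17; 19; 18; 10], [:: (11, 8)]));
  ((7, 1, 13), ([:: 21; 13; 11; 19; 20; 12; 4; 5; 6; 14; 0; 1; 15; 7; 8; 16; 2; 3; 17; 9; 10; 18], [:: (14, 8)]));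
  ((1, 8, 13), ([:: 0; 2; 10; 18; 16; 8; 9; 17; 15; 7; 5; 13; 21; 19; 11; 3; 1; 22; 14; 6; 4; 12; 20], [:: (15, 8); (2, 2)]));
  ((2, 7, 13), ([:: 12; 4; 6; 14; 16; 8; 0; 21; 20; 18; 10; 2; 3; 11; 19; 17; 9; 1; 22; 7; 15; 13; 5], [:: (21, 1); (12, 8)]));
  ((3, 6, 13), ([:: 11; 19; 18; 10; 2; 0; 8; 16; 14; 6; 4; 12; 20; 21; 22; 7; 15; 13; 5; 3; 1; 9; 17], [:: (21, 1); (13, 8)]));
  ((4, 5, 13), ([:: 3; 4; 6; 14; 22; 20; 12; 11; 19; 18; 10; 8; 16; 1; 2; 17; 9; 7; 15; 0; 21; 13; 5], [:: (13, 8); (4, 1)]));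
  ((5, 4, 13), ([:: 12; 20; 19; 11; 3; 4; 5; 13; 21; 22; 7; 15; 17; 9; 1; 0; 2; 10; 18; 16; 8; 6; 14], [:: (22, 1); (13, 8)]));
  ((6, 3, 13), ([:: 17; 9; 8; 16; 14; 6; 7; 15; 0; 1; 2; 10; 18; 19; 11; 3; 5; 13; 21; 22; 20; 12; 4], [:: (10, 8); (2, 1)]));
  ((7, 2, 13), ([:: 6; 14; 15; 7; 22; 21; 20; 5; 13; 11; 3; 2; 10; 12; 4; 19; 18; 17; 9; 1; 0; 8; 16], [:: (18, 1); (8, 8)]));
  ((8, 1, 13), ([:: 0; 1; 22; 14; 13; 21; 6; 7; 15; 16; 8; 9; 17; 2; 3; 18; 10; 11; 19; 4; 5; 20; 12], [:: (15, 8); (7, 1)]));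
  ((1, 9, 13), ([:: 16; 8; 10; 18; 20; 12; 4; 2; 0; 22; 14; 6; 7; 15; 23; 21; 13; 5; 3; 1; 17; 9; 11; 19], [:: (12, 8); (3, 2)]));
  ((2, 8, 13), ([:: 2; 4; 12; 20; 18; 10; 11; 19; 17; 9; 7; 15; 23; 21; 13; 5; 3; 1; 0; 16; 8; 6; 14; 22], [:: (16, 8); (4, 2); (1, 1)]));
  ((3, 7, 13), ([:: 18; 10; 11; 19; 21; 13; 5; 6; 14; 22; 20; 12; 4; 2; 0; 16; 8; 9; 17; 15; 7; 23; 1; 3], [:: (14, 8)]));
  ((4, 6, 13), ([:: 0; 16; 8; 6; 14; 12; 4; 2; 18; 10; 9; 17; 1; 23; 15; 7; 5; 13; 11; 3; 19; 20; 21; 22], [:: (11, 8)]));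
  ((5, 5, 13), ([:: 7; 15; 14; 6; 8; 16; 18; 10; 2; 3; 19; 11; 9; 17; 1; 0; 23; 21; 13; 5; 4; 12; 20; 22], [:: (13, 8)]));
  ((6, 4, 13), ([:: 11; 3; 1; 2; 10; 18; 19; 21; 13; 5; 4; 12; 20; 22; 14; 6; 7; 15; 17; 9; 8; 16; 0; 23], [:: (10, 8)]));
  ((7, 3, 13), ([:: 4; 12; 20; 18; 10; 9; 17; 19; 21; 13; 5; 6; 14; 22; 23; 15; 7; 8; 16; 0; 1; 2; 3; 11], [:: (11, 8)]));
  ((8, 2, 13), ([:: 6; 14; 15; 7; 8; 16; 18; 10; 2; 3; 19; 11; 9; 17; 1; 0; 23; 22; 21; 13; 5; 4; 12; 20], [:: (12, 8)]));
  ((9, 1, 13), ([:: 7; 15; 14; 6; 22; 21; 5; 13; 12; 4; 20; 19; 11; 3; 2; 10; 9; 1; 23; 0; 8; 16; 17; 18], [:: (8, 8)]));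
  ((2, 9, 13), ([:: 3; 11; 9; 1; 24; 7; 15; 13; 5; 22; 21; 19; 17; 16; 8; 0; 23; 6; 14; 12; 4; 2; 10; 18; 20], [:: (22, 1); (20, 2); (8, 8)]));
  ((1, 6, 14), ([:: 4; 12; 20; 18; 10; 2; 16; 8; 0; 14; 6; 7; 15; 13; 5; 3; 17; 9; 11; 19; 21; 1], [:: (12, 8)]));
  ((2, 5, 14), ([:: 0; 14; 6; 20; 12; 4; 3; 5; 7; 15; 17; 9; 1; 21; 13; 11; 19; 18; 10; 2; 16; 8], [:: (14, 8)]));
  ((3, 4, 14), ([:: 19; 11; 13; 21; 7; 15; 16; 8; 6; 14; 0; 20; 12; 4; 5; 3; 17; 9; 1; 2; 10; 18], [:: (14, 8)]));
  ((4, 3, 14), ([:: 16; 8; 6; 14; 0; 2; 1; 9; 17; 3; 4; 12; 20; 21; 7; 15; 13; 5; 19; 11; 10; 18], [:: (13, 8)]));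
  ((5, 2, 14), ([:: 19; 11; 10; 18; 20; 12; 4; 3; 17; 9; 7; 15; 1; 2; 16; 8; 0; 21; 13; 5; 6; 14], [:: (13, 8)]));
  ((6, 1, 14), ([:: 4; 12; 14; 6; 7; 15; 16; 8; 0; 1; 9; 17; 18; 10; 2; 3; 11; 19; 5; 13; 21; 20], [:: (10, 8)]));
  ((1, 7, 14), ([:: 11; 3; 5; 13; 21; 19; 18; 10; 2; 0; 8; 16; 14; 6; 4; 12; 20; 22; 7; 15; 17; 9; 1], [:: (8, 8)]));
  ((2, 6, 14), ([:: 18; 10; 2; 3; 11; 19; 21; 13; 5; 7; 15; 17; 9; 1; 22; 0; 8; 16; 14; 6; 4; 12; 20], [:: (10, 8)]));
  ((3, 5, 14), ([:: 13; 5; 4; 12; 11; 3; 1; 16; 8; 9; 17; 19; 21; 6; 14; 22; 7; 15; 0; 2; 10; 18; 20], [:: (11, 8)]));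
  ((4, 4, 14), ([:: 10; 18; 20; 12; 4; 19; 11; 3; 2; 1; 16; 8; 9; 17; 15; 7; 5; 13; 21; 0; 22; 14; 6], [:: (13, 8)]));
  ((5, 3, 14), ([:: 2; 17; 9; 11; 19; 21; 13; 12; 20; 5; 4; 3; 18; 10; 8; 16; 1; 0; 15; 7; 6; 14; 22], [:: (14, 8)]));
  ((6, 2, 14), ([:: 12; 4; 2; 3; 11; 19; 20; 5; 13; 14; 6; 21; 22; 7; 15; 0; 1; 9; 17; 18; 10; 8; 16], [:: (11, 8)]));
  ((7, 1, 14), ([:: 21; 22; 1; 0; 15; 7; 6; 14; 13; 5; 20; 19; 4; 12; 11; 3; 18; 10; 2; 17; 9; 8; 16], [:: (10, 8)]));
  ((1, 8, 14), ([:: 9; 17; 19; 11; 3; 1; 23; 21; 13; 5; 7; 15; 14; 6; 22; 20; 12; 4; 2; 10; 18; 16; 8; 0], [:: (22, 2); (14, 8)]));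
  ((2, 7, 14), ([:: 17; 9; 1; 2; 10; 18; 20; 12; 4; 6; 14; 16; 8; 0; 22; 21; 19; 11; 3; 5; 13; 15; 7; 23], [:: (22, 1); (8, 8)]));
  ((3, 6, 14), ([:: 21; 13; 5; 6; 14; 16; 8; 0; 2; 4; 12; 20; 22; 23; 7; 15; 17; 9; 1; 3; 11; 19; 18; 10], [:: (23, 1); (13, 8)]));
  ((4, 5, 14), ([:: 18; 10; 9; 17; 1; 3; 19; 11; 12; 20; 22; 14; 6; 7; 15; 23; 21; 13; 5; 4; 2; 0; 16; 8], [:: (13, 8); (5, 1)]));
  ((5, 4, 14), ([:: 6; 14; 15; 7; 5; 13; 21; 19; 11; 3; 4; 12; 20; 22; 23; 0; 8; 16; 18; 10; 2; 1; 9; 17], [:: (23, 1); (14, 8)]));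
  ((6, 3, 14), ([:: 11; 19; 21; 13; 14; 22; 6; 7; 15; 23; 0; 16; 8; 9; 17; 1; 2; 18; 10; 12; 20; 4; 3; 5], [:: (16, 8); (7, 1)]));
  ((7, 2, 14), ([:: 14; 22; 21; 13; 11; 19; 3; 2; 18; 10; 12; 20; 4; 5; 6; 7; 15; 23; 0; 16; 8; 9; 17; 1], [:: (15, 8); (7, 1)]));
  ((8, 1, 14), ([:: 21; 13; 12; 20; 19; 11; 3; 2; 18; 10; 9; 17; 1; 0; 16; 8; 7; 15; 23; 22; 14; 6; 4; 5], [:: (15, 8); (3, 1)]));
  ((1, 9, 14), ([:: 14; 22; 24; 16; 8; 6; 4; 2; 19; 11; 9; 17; 0; 23; 15; 7; 5; 13; 21; 20; 12; 10; 18; 1; 3], [:: (17, 8); (3, 2)]));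
  ((2, 8, 14), ([:: 12; 20; 22; 14; 6; 5; 3; 1; 18; 10; 8; 16; 24; 0; 17; 9; 7; 15; 23; 21; 13; 11; 19; 2; 4], [:: (17, 8); (6, 1); (3, 2)]));
  ((3, 7, 14), ([:: 2; 4; 12; 13; 5; 7; 15; 17; 9; 10; 18; 20; 3; 11; 19; 21; 22; 14; 6; 23; 0; 8; 16; 24; 1], [:: (12, 8)]));
  ((4, 6, 14), ([:: 9; 1; 3; 11; 12; 4; 6; 14; 16; 8; 0; 24; 7; 15; 23; 21; 13; 5; 22; 20; 19; 17; 18; 10; 2], [:: (9, 8)]));
  ((5, 5, 14), ([:: 21; 13; 5; 7; 15; 23; 6; 14; 12; 4; 2; 10; 18; 17; 9; 8; 16; 24; 0; 1; 3; 11; 19; 20; 22], [:: (10, 8)]));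
  ((6, 4, 14), ([:: 1; 0; 2; 19; 17; 9; 10; 18; 16; 8; 7; 15; 14; 6; 23; 24; 22; 5; 13; 21; 4; 12; 11; 3; 20], [:: (11, 8)]));
  ((7, 3, 14), ([:: 14; 6; 5; 13; 15; 7; 9; 17; 16; 8; 0; 1; 24; 23; 22; 21; 4; 12; 20; 3; 11; 19; 18; 10; 2], [:: (12, 8)]));
  ((8, 2, 14), ([:: 15; 7; 5; 4; 12; 20; 3; 2; 1; 0; 17; 9; 8; 16; 24; 23; 6; 14; 22; 21; 13; 11; 19; 18; 10], [:: (14, 8)]));
  ((9, 1, 14), ([:: 21; 4; 12; 20; 19; 11; 3; 2; 1; 18; 10; 8; 16; 15; 7; 6; 14; 13; 5; 22; 23; 24; 0; 17; 9], [:: (12, 8)]));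
  ((2, 9, 14), ([:: 6; 14; 16; 8; 0; 24; 23; 21; 19; 11; 3; 5; 13; 15; 7; 25; 1; 9; 17; 18; 10; 2; 4; 12; 20; 22], [:: (24, 1); (22, 2); (8, 8)]));
  ((1, 6, 15), ([:: 11; 3; 18; 20; 22; 7; 15; 17; 9; 1; 16; 8; 0; 2; 10; 12; 4; 19; 21; 6; 14; 13; 5], [:: (10, 8)]));
  ((2, 5, 15), ([:: 17; 9; 10; 18; 20; 12; 4; 19; 11; 3; 1; 22; 14; 6; 21; 13; 5; 7; 15; 16; 8; 0; 2], [:: (12, 8)]));
  ((3, 4, 15), ([:: 4; 12; 20; 21; 13; 5; 6; 14; 15; 7; 9; 17; 19; 11; 3; 18; 10; 2; 0; 8; 16; 1; 22], [:: (14, 8)]));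
  ((4, 3, 15), ([:: 16; 8; 10; 18; 20; 5; 13; 21; 22; 0; 15; 7; 6; 14; 12; 4; 19; 11; 3; 2; 17; 9; 1], [:: (11, 8)]));
  ((5, 2, 15), ([:: 10; 18; 19; 11; 9; 17; 2; 3; 1; 16; 8; 7; 15; 0; 22; 14; 6; 21; 13; 5; 4; 12; 20], [:: (12, 8)]));
  ((6, 1, 15), ([:: 11; 3; 18; 17; 16; 8; 0; 22; 7; 15; 14; 6; 21; 13; 5; 20; 19; 4; 12; 10; 2; 1; 9], [:: (8, 8)]));
  ((1, 7, 15), ([:: 18; 20; 4; 12; 10; 2; 0; 16; 8; 6; 14; 22; 23; 7; 15; 17; 1; 9; 11; 3; 19; 21; 5; 13], [:: (9, 8)]));
  ((2, 6, 15), ([:: 18; 10; 8; 16; 0; 22; 6; 14; 15; 7; 23; 1; 9; 17; 19; 11; 3; 5; 13; 21; 20; 12; 4; 2], [:: (11, 8)]));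
  ((3, 5, 15), ([:: 15; 7; 5; 13; 21; 22; 6; 14; 12; 4; 20; 18; 10; 2; 3; 19; 11; 9; 17; 1; 23; 0; 8; 16], [:: (12, 8)]));
  ((4, 4, 15), ([:: 10; 18; 19; 11; 3; 2; 4; 12; 20; 22; 14; 6; 5; 13; 21; 23; 15; 7; 9; 17; 1; 0; 16; 8], [:: (11, 8)]));
  ((5, 3, 15), ([:: 18; 10; 9; 17; 1; 0; 16; 8; 7; 15; 23; 21; 13; 5; 6; 14; 22; 20; 12; 4; 2; 3; 11; 19], [:: (11, 8)]));
  ((6, 2, 15), ([:: 14; 6; 4; 12; 20; 19; 11; 3; 5; 13; 21; 22; 23; 7; 15; 16; 8; 0; 1; 9; 17; 18; 10; 2], [:: (11, 8)]));
  ((7, 1, 15), ([:: 16; 8; 0; 23; 22; 14; 6; 5; 13; 21; 20; 12; 4; 3; 19; 11; 10; 18; 2; 1; 9; 17; 15; 7], [:: (13, 8)]));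
  ((1, 8, 15), ([:: 19; 11; 3; 1; 18; 10; 8; 16; 24; 22; 20; 12; 4; 2; 0; 17; 9; 7; 15; 23; 21; 13; 5; 6; 14], [:: (13, 8); (2, 2)]));
  ((2, 7, 15), ([:: 15; 7; 9; 17; 0; 23; 21; 13; 5; 3; 11; 19; 20; 12; 4; 2; 1; 18; 10; 8; 16; 24; 22; 14; 6], [:: (14, 8); (2, 1)]));
  ((3, 6, 15), ([:: 6; 14; 22; 21; 13; 5; 7; 15; 23; 0; 1; 9; 17; 19; 11; 3; 2; 4; 12; 20; 18; 10; 8; 16; 24], [:: (14, 8); (1, 1)]));
  ((4, 5, 15), ([:: 17; 9; 8; 16; 24; 1; 18; 10; 11; 19; 2; 0; 23; 15; 7; 5; 13; 21; 22; 14; 6; 4; 3; 20; 12], [:: (17, 8); (4, 1)]));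
  ((5, 4, 15), ([:: 10; 18; 19; 11; 3; 2; 1; 0; 17; 9; 7; 15; 23; 21; 13; 5; 4; 12; 20; 22; 14; 6; 8; 16; 24], [:: (14, 8); (3, 1)]));
  ((6, 3, 15), ([:: 9; 1; 0; 8; 16; 14; 6; 23; 24; 7; 15; 13; 5; 22; 21; 20; 12; 4; 3; 11; 19; 17; 18; 10; 2], [:: (21, 1); (8, 8)]));
  ((7, 2, 15), ([:: 2; 1; 24; 16; 8; 7; 15; 23; 0; 17; 9; 10; 18; 19; 11; 3; 4; 12; 20; 21; 13; 5; 6; 14; 22], [:: (11, 8); (2, 1)]));
  ((8, 1, 15), ([:: 20; 12; 4; 5; 13; 14; 6; 23; 22; 21; 19; 11; 3; 2; 10; 18; 17; 9; 1; 0; 8; 16; 15; 7; 24], [:: (23, 1); (12, 8)]));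
  ((1, 9, 15), ([:: 4; 2; 20; 12; 10; 18; 0; 24; 16; 8; 6; 14; 22; 23; 15; 7; 5; 13; 21; 19; 11; 9; 17; 25; 1; 3], [:: (14, 8); (3, 2)]));
  ((2, 8, 15), ([:: 13; 5; 4; 12; 20; 18; 10; 2; 0; 8; 16; 14; 6; 24; 22; 21; 19; 11; 3; 1; 9; 17; 15; 7; 25; 23], [:: (24, 2); (22, 1); (13, 8)]));
  ((3, 7, 15), ([:: 12; 4; 2; 1; 19; 20; 22; 14; 6; 8; 16; 24; 0; 18; 10; 9; 17; 25; 23; 15; 7; 5; 13; 11; 3; 21], [:: (11, 8)]));
  ((4, 6, 15), ([:: 9; 17; 19; 21; 22; 24; 6; 14; 16; 8; 7; 15; 23; 5; 13; 11; 3; 4; 12; 20; 2; 10; 18; 0; 25; 1], [:: (10, 8)]));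
  ((5, 5, 15), ([:: 8; 16; 18; 10; 9; 17; 15; 7; 25; 0; 1; 3; 21; 19; 11; 12; 20; 2; 4; 22; 14; 6; 24; 23; 5; 13], [:: (13, 8)]));
  ((6, 4, 15), ([:: 10; 18; 16; 8; 0; 25; 7; 15; 14; 6; 5; 13; 12; 4; 22; 24; 23; 21; 3; 11; 19; 17; 9; 1; 2; 20], [:: (12, 8)]));
  ((7, 3, 15), ([:: 19; 1; 0; 25; 17; 9; 8; 16; 14; 6; 7; 15; 23; 5; 13; 21; 20; 18; 10; 2; 3; 11; 12; 4; 22; 24], [:: (10, 8)]));
  ((8, 2, 15), ([:: 25; 7; 15; 17; 9; 8; 16; 24; 0; 1; 2; 10; 18; 19; 11; 3; 4; 12; 20; 21; 13; 5; 6; 14; 22; 23], [:: (11, 8)]));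
  ((9, 1, 15), ([:: 17; 9; 1; 2; 10; 12; 4; 3; 11; 19; 18; 0; 8; 16; 15; 7; 25; 24; 23; 22; 14; 6; 5; 13; 21; 20], [:: (10, 8)]));
  ((2, 9, 15), ([:: 3; 11; 19; 21; 13; 5; 7; 15; 23; 25; 26; 1; 9; 17; 18; 10; 2; 0; 8; 16; 14; 6; 4; 12; 20; 22; 24], [:: (26, 1); (24, 2); (10, 8)]));
  ((1, 6, 16), ([:: 20; 12; 4; 2; 18; 10; 8; 16; 0; 22; 14; 6; 7; 15; 23; 1; 9; 17; 19; 11; 3; 5; 13; 21], [:: (13, 8)]));
  ((2, 5, 16), ([:: 6; 14; 22; 20; 12; 4; 2; 18; 10; 11; 19; 3; 5; 13; 21; 23; 15; 7; 9; 17; 1; 0; 16; 8], [:: (14, 8)]));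
  ((3, 4, 16), ([:: 22; 6; 14; 13; 5; 21; 20; 12; 4; 2; 18; 10; 8; 16; 0; 23; 15; 7; 9; 17; 1; 3; 11; 19], [:: (12, 8)]));
  ((4, 3, 16), ([:: 17; 1; 9; 11; 3; 19; 18; 2; 10; 12; 4; 20; 21; 13; 5; 6; 14; 22; 0; 8; 16; 15; 7; 23], [:: (8, 8)]));
  ((5, 2, 16), ([:: 4; 12; 20; 22; 6; 14; 15; 7; 23; 0; 8; 16; 17; 9; 1; 2; 18; 10; 11; 19; 3; 5; 13; 21], [:: (14, 8)]));
  ((6, 1, 16), ([:: 13; 5; 21; 20; 12; 4; 3; 11; 19; 18; 10; 2; 1; 17; 9; 8; 16; 0; 22; 6; 14; 15; 7; 23], [:: (12, 8)]));
  ((1, 7, 16), ([:: 17; 9; 1; 3; 11; 13; 5; 6; 14; 22; 20; 12; 4; 21; 19; 2; 0; 23; 15; 7; 24; 16; 8; 10; 18], [:: (11, 8)]));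
  ((2, 6, 16), ([:: 15; 7; 9; 17; 18; 10; 8; 16; 24; 1; 3; 11; 19; 20; 12; 4; 21; 13; 5; 22; 14; 6; 23; 0; 2], [:: (12, 8)]));
  ((3, 5, 16), ([:: 18; 10; 9; 17; 16; 8; 0; 23; 15; 7; 5; 13; 21; 4; 6; 14; 22; 24; 1; 2; 19; 11; 3; 20; 12], [:: (13, 8)]));
  ((4, 4, 16), ([:: 19; 21; 23; 24; 0; 8; 16; 17; 9; 1; 18; 10; 2; 4; 12; 20; 3; 11; 13; 5; 22; 14; 6; 7; 15], [:: (10, 8)]));
  ((5, 3, 16), ([:: 10; 18; 1; 9; 17; 16; 8; 0; 23; 24; 7; 15; 14; 6; 5; 13; 21; 22; 20; 12; 4; 2; 19; 11; 3], [:: (11, 8)]));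
  ((6, 2, 16), ([:: 9; 17; 15; 7; 24; 23; 6; 14; 22; 21; 13; 5; 4; 12; 20; 19; 11; 3; 2; 10; 18; 16; 8; 0; 1], [:: (11, 8)]));
  ((7, 1, 16), ([:: 21; 13; 5; 4; 12; 20; 3; 11; 19; 2; 1; 0; 8; 16; 24; 23; 22; 14; 6; 7; 15; 17; 9; 10; 18], [:: (14, 8)]));
  ((1, 8, 16), ([:: 9; 17; 25; 1; 19; 11; 13; 21; 3; 5; 7; 15; 23; 22; 14; 6; 4; 2; 20; 12; 10; 18; 0; 24; 16; 8], [:: (16, 8); (4, 2)]));
  ((2, 7, 16), ([:: 8; 16; 24; 22; 14; 6; 4; 5; 13; 21; 23; 15; 7; 9; 17; 25; 1; 19; 11; 3; 2; 0; 18; 10; 12; 20], [:: (15, 8); (3, 1)]));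
  ((3, 6, 16), ([:: 7; 15; 23; 25; 1; 19; 11; 9; 17; 18; 10; 8; 16; 24; 0; 2; 20; 12; 4; 3; 21; 13; 5; 6; 14; 22], [:: (14, 8); (4, 1)]));
  ((4, 5, 16), ([:: 15; 23; 25; 17; 9; 7; 6; 24; 16; 8; 10; 18; 0; 2; 20; 12; 11; 19; 1; 3; 21; 13; 14; 22; 4; 5], [:: (18, 8); (7, 1)]));
  ((5, 4, 16), ([:: 14; 22; 23; 15; 7; 5; 6; 8; 16; 24; 25; 17; 9; 10; 18; 0; 2; 20; 12; 4; 3; 21; 13; 11; 19; 1], [:: (18, 8); (4, 1)]));
  ((6, 3, 16), ([:: 24; 25; 1; 19; 11; 10; 18; 0; 2; 20; 12; 4; 3; 21; 13; 5; 6; 14; 22; 23; 15; 7; 9; 17; 16; 8], [:: (15, 8); (4, 1)]));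
  ((7, 2, 16), ([:: 2; 1; 19; 11; 10; 18; 0; 25; 17; 9; 8; 16; 24; 23; 15; 7; 6; 14; 22; 20; 12; 4; 3; 5; 13; 21], [:: (15, 8); (2, 1)]));
  ((8, 1, 16), ([:: 0; 25; 24; 6; 14; 13; 5; 23; 22; 4; 12; 20; 21; 3; 11; 19; 18; 10; 2; 1; 9; 17; 15; 7; 8; 16], [:: (21, 1); (11, 8)]));
  ((1, 9, 16), ([:: 24; 16; 8; 6; 4; 23; 15; 13; 21; 2; 0; 19; 11; 10; 18; 26; 1; 20; 12; 14; 22; 3; 5; 7; 9; 17; 25], [:: (16, 8); (8, 2)]));
  ((2, 8, 16), ([:: 19; 11; 3; 1; 9; 17; 15; 7; 26; 24; 22; 21; 13; 5; 4; 12; 20; 18; 10; 2; 0; 8; 16; 14; 6; 25; 23], [:: (25, 2); (22, 1); (14, 8)]));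
  ((3, 7, 16), ([:: 3; 11; 19; 17; 9; 7; 15; 23; 4; 12; 13; 5; 24; 25; 6; 14; 16; 8; 10; 18; 26; 1; 20; 22; 21; 2; 0], [:: (12, 8)]));
  ((4, 6, 16), ([:: 15; 7; 5; 13; 14; 6; 8; 16; 24; 23; 25; 0; 26; 18; 10; 2; 4; 12; 20; 1; 9; 17; 19; 11; 3; 22; 21], [:: (12, 8)]));
  ((5, 5, 16), ([:: 24; 16; 8; 7; 15; 14; 6; 5; 3; 11; 19; 0; 25; 17; 9; 1; 26; 18; 10; 2; 4; 23; 22; 20; 12; 13; 21], [:: (14, 8)]));
  ((6, 4, 16), ([:: 22; 23; 25; 6; 14; 15; 7; 26; 24; 5; 4; 2; 21; 13; 12; 20; 1; 3; 11; 19; 0; 8; 16; 17; 9; 10; 18], [:: (14, 8)]));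
  ((7, 3, 16), ([:: 22; 3; 5; 13; 14; 6; 7; 15; 17; 9; 1; 0; 8; 16; 24; 25; 26; 18; 10; 11; 19; 20; 12; 4; 23; 21; 2], [:: (12, 8)]));
  ((8, 2, 16), ([:: 18; 10; 11; 19; 20; 12; 4; 5; 13; 15; 7; 8; 16; 24; 23; 21; 2; 3; 22; 14; 6; 25; 17; 9; 1; 0; 26], [:: (13, 8)]));
  ((9, 1, 16), ([:: 8; 16; 14; 6; 25; 24; 23; 15; 7; 26; 0; 1; 9; 17; 18; 10; 11; 19; 20; 12; 4; 5; 13; 21; 2; 3; 22], [:: (12, 8)]));
  ((2, 9, 16), ([:: 5; 13; 21; 19; 11; 3; 1; 9; 17; 18; 10; 2; 0; 8; 16; 14; 6; 4; 12; 20; 22; 24; 26; 27; 7; 15; 23; 25], [:: (27, 1); (24, 2); (10, 8)]));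
  ((1, 6, 17), ([:: 6; 14; 13; 5; 7; 15; 17; 9; 1; 18; 10; 2; 19; 11; 3; 20; 22; 24; 16; 8; 0; 23; 21; 4; 12], [:: (8, 8)]));
  ((2, 5, 17), ([:: 20; 12; 11; 19; 2; 0; 17; 9; 1; 3; 4; 21; 13; 5; 22; 24; 7; 15; 23; 6; 14; 16; 8; 10; 18], [:: (14, 8)]));
  ((3, 4, 17), ([:: 7; 15; 23; 21; 4; 12; 10; 2; 19; 18; 1; 9; 17; 0; 24; 16; 8; 6; 14; 13; 5; 22; 20; 3; 11], [:: (9, 8)]));
  ((4, 3, 17), ([:: 5; 13; 14; 6; 8; 16; 15; 7; 24; 1; 9; 17; 0; 23; 22; 21; 4; 12; 20; 3; 11; 19; 2; 10; 18], [:: (13, 8)]));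
  ((5, 2, 17), ([:: 2; 10; 12; 4; 3; 11; 13; 5; 22; 21; 20; 19; 18; 1; 9; 17; 0; 8; 16; 24; 7; 15; 23; 6; 14], [:: (9, 8)]));
  ((6, 1, 17), ([:: 8; 16; 17; 9; 7; 15; 14; 6; 23; 24; 0; 1; 18; 10; 2; 19; 11; 3; 20; 12; 4; 21; 22; 5; 13], [:: (13, 8)]));
  ((1, 7, 17), ([:: 9; 17; 25; 1; 3; 11; 19; 21; 23; 15; 7; 5; 13; 14; 6; 24; 16; 8; 0; 18; 10; 12; 20; 2; 4; 22], [:: (13, 8)]));
  ((2, 6, 17), ([:: 0; 2; 3; 5; 13; 21; 23; 15; 7; 25; 1; 19; 11; 9; 17; 18; 10; 8; 16; 24; 6; 14; 22; 4; 12; 20], [:: (12, 8)]));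
  ((3, 5, 17), ([:: 8; 16; 17; 9; 7; 15; 13; 5; 3; 21; 23; 25; 24; 6; 14; 22; 4; 12; 20; 2; 10; 18; 0; 1; 19; 11], [:: (13, 8)]));
  ((4, 4, 17), ([:: 10; 18; 0; 24; 22; 14; 6; 7; 15; 23; 5; 13; 12; 4; 2; 20; 21; 3; 11; 19; 1; 25; 17; 9; 8; 16], [:: (11, 8)]));
  ((5, 3, 17), ([:: 2; 3; 21; 13; 11; 19; 17; 9; 10; 18; 20; 12; 4; 22; 14; 6; 5; 23; 15; 7; 25; 24; 16; 8; 0; 1], [:: (14, 8)]));
  ((6, 2, 17), ([:: 1; 2; 20; 12; 4; 22; 23; 25; 7; 15; 14; 6; 24; 0; 8; 16; 17; 9; 10; 18; 19; 11; 3; 21; 13; 5], [:: (13, 8)]));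
  ((7, 1, 17), ([:: 19; 11; 10; 18; 20; 21; 3; 2; 1; 9; 17; 16; 8; 0; 25; 7; 15; 23; 5; 13; 12; 4; 22; 14; 6; 24], [:: (12, 8)]));
  ((1, 8, 17), ([:: 13; 5; 3; 11; 9; 1; 20; 22; 24; 23; 4; 12; 10; 2; 21; 19; 0; 8; 16; 18; 26; 7; 15; 17; 25; 6; 14], [:: (17, 2); (8, 8)]));
  ((2, 7, 17), ([:: 15; 7; 26; 24; 23; 21; 13; 5; 3; 11; 19; 17; 9; 1; 2; 10; 18; 16; 8; 0; 25; 6; 14; 22; 20; 12; 4], [:: (24, 1); (11, 8)]));
  ((3, 6, 17), ([:: 7; 15; 14; 6; 25; 23; 4; 12; 10; 2; 21; 19; 0; 8; 16; 17; 18; 26; 24; 5; 13; 11; 3; 22; 20; 1; 9], [:: (18, 1); (9, 8)]));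
  ((4, 5, 17), ([:: 26; 0; 8; 16; 17; 9; 1; 3; 11; 19; 21; 13; 5; 7; 15; 23; 24; 25; 6; 14; 22; 20; 12; 4; 2; 10; 18], [:: (24, 1); (13, 8)]));
  ((5, 4, 17), ([:: 18; 17; 9; 1; 0; 8; 16; 14; 6; 25; 26; 7; 15; 13; 5; 24; 22; 3; 11; 19; 20; 21; 2; 10; 12; 4; 23], [:: (21, 1); (8, 8)]));
  ((6, 3, 17), ([:: 17; 9; 11; 19; 20; 12; 4; 23; 24; 5; 13; 21; 22; 3; 2; 10; 18; 16; 8; 0; 1; 26; 7; 15; 14; 6; 25], [:: (22, 1); (14, 8)]));
  ((7, 2, 17), ([:: 6; 5; 3; 22; 14; 13; 21; 2; 4; 23; 15; 7; 8; 16; 24; 25; 17; 9; 10; 18; 26; 0; 19; 11; 12; 20; 1], [:: (17, 8); (6, 1)]));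
  ((8, 1, 17), ([:: 7; 15; 14; 6; 25; 24; 5; 13; 21; 22; 23; 4; 12; 20; 19; 11; 3; 2; 10; 18; 17; 9; 1; 26; 0; 8; 16], [:: (23, 1); (13, 8)]));
  ((1, 9, 17), ([:: 26; 18; 10; 8; 16; 14; 6; 4; 24; 22; 2; 0; 20; 12; 11; 19; 27; 1; 21; 13; 5; 3; 23; 25; 17; 9; 7; 15], [:: (14, 8); (5, 2)]));
  ((2, 8, 17), ([:: 19; 11; 3; 5; 13; 21; 23; 24; 26; 6; 14; 22; 20; 12; 4; 2; 10; 18; 16; 8; 0; 1; 9; 17; 15; 7; 27; 25], [:: (26, 2); (24, 1); (13, 8)]));
  ((3, 7, 17), ([:: 7; 15; 17; 9; 1; 21; 13; 5; 3; 11; 19; 18; 10; 12; 20; 0; 8; 16; 14; 6; 26; 27; 25; 23; 24; 4; 2; 22], [:: (13, 8)]));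
  ((4, 6, 17), ([:: 23; 22; 20; 21; 13; 5; 3; 1; 9; 17; 25; 24; 16; 8; 0; 2; 4; 12; 14; 6; 26; 18; 10; 11; 19; 27; 7; 15], [:: (12, 8)]));
  ((5, 5, 17), ([:: 0; 1; 21; 23; 24; 4; 12; 13; 5; 3; 11; 19; 20; 22; 2; 10; 18; 26; 6; 14; 16; 8; 9; 17; 25; 27; 7; 15], [:: (11, 8)]));
  ((6, 4, 17), ([:: 25; 5; 13; 15; 7; 6; 14; 12; 4; 3; 11; 19; 20; 0; 8; 16; 17; 9; 1; 21; 23; 24; 22; 2; 10; 18; 26; 27], [:: (12, 8)]));
  ((7, 3, 17), ([:: 0; 8; 9; 1; 27; 25; 5; 13; 21; 20; 19; 17; 16; 24; 4; 12; 11; 3; 2; 10; 18; 26; 6; 14; 22; 23; 15; 7], [:: (8, 8)]));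
  ((8, 2, 17), ([:: 6; 14; 13; 5; 4; 12; 10; 2; 22; 20; 21; 1; 9; 17; 25; 24; 16; 8; 7; 15; 23; 3; 11; 19; 18; 26; 27; 0], [:: (10, 8)]));
  ((9, 1, 17), ([:: 26; 6; 14; 13; 5; 4; 12; 20; 22; 23; 15; 7; 27; 0; 8; 16; 24; 25; 17; 18; 19; 11; 3; 2; 10; 9; 1; 21], [:: (8, 8)]));
  ((2, 9, 17), ([:: 7; 15; 23; 25; 27; 28; 1; 9; 17; 19; 11; 3; 5; 13; 21; 22; 14; 6; 4; 12; 20; 18; 10; 2; 0; 8; 16; 24; 26], [:: (28, 1); (26, 2); (13, 8)]));
  ((1, 6, 18), ([:: 13; 5; 23; 21; 19; 11; 3; 1; 25; 7; 15; 17; 9; 10; 18; 0; 2; 20; 12; 4; 22; 14; 6; 24; 16; 8], [:: (11, 8)]));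
  ((2, 5, 18), ([:: 2; 1; 9; 17; 25; 23; 15; 7; 5; 13; 21; 19; 11; 3; 4; 12; 20; 22; 14; 6; 24; 16; 8; 10; 18; 0], [:: (13, 8)]));
  ((3, 4, 18), ([:: 22; 23; 15; 7; 8; 16; 14; 6; 24; 0; 18; 10; 2; 20; 12; 4; 5; 13; 21; 3; 1; 19; 11; 9; 17; 25], [:: (12, 8)]));
  ((4, 3, 18), ([:: 16; 18; 19; 20; 2; 10; 8; 0; 1; 9; 17; 25; 7; 15; 23; 5; 13; 21; 3; 11; 12; 4; 22; 24; 6; 14], [:: (8, 8)]));
  ((5, 2, 18), ([:: 22; 4; 12; 13; 5; 7; 15; 23; 24; 6; 14; 16; 8; 0; 25; 17; 9; 1; 19; 18; 10; 2; 20; 21; 3; 11], [:: (11, 8)]));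
  ((6, 1, 18), ([:: 16; 8; 0; 18; 10; 12; 20; 2; 3; 11; 19; 1; 9; 17; 25; 7; 15; 14; 6; 24; 23; 22; 21; 13; 5; 4], [:: (14, 8)]));
  ((1, 7, 18), ([:: 22; 24; 26; 1; 9; 17; 25; 23; 4; 12; 20; 18; 10; 2; 21; 13; 5; 3; 11; 19; 0; 8; 16; 14; 6; 7; 15], [:: (8, 8)]));
  ((2, 6, 18), ([:: 9; 17; 18; 10; 12; 20; 1; 2; 4; 6; 14; 22; 3; 11; 19; 21; 13; 5; 24; 16; 8; 0; 25; 23; 15; 7; 26], [:: (14, 8)]));
  ((3, 5, 18), ([:: 21; 19; 20; 18; 10; 2; 1; 26; 0; 8; 16; 24; 5; 13; 11; 3; 22; 14; 6; 25; 17; 9; 7; 15; 23; 4; 12], [:: (11, 8)]));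
  ((4, 4, 18), ([:: 24; 23; 25; 17; 9; 1; 2; 10; 11; 3; 22; 14; 6; 4; 12; 20; 18; 26; 7; 15; 16; 8; 0; 19; 21; 13; 5], [:: (9, 8)]));
  ((5, 3, 18), ([:: 25; 6; 14; 15; 7; 26; 1; 9; 17; 19; 0; 8; 16; 24; 5; 13; 21; 20; 18; 10; 2; 3; 11; 12; 4; 23; 22], [:: (8, 8)]));
  ((6, 2, 18), ([:: 14; 6; 4; 12; 20; 21; 13; 5; 3; 11; 19; 0; 8; 16; 15; 7; 26; 18; 10; 2; 1; 9; 17; 25; 24; 23; 22], [:: (11, 8)]));
  ((7, 1, 18), ([:: 5; 13; 21; 22; 14; 6; 4; 12; 11; 3; 2; 10; 18; 17; 9; 1; 20; 19; 0; 8; 16; 24; 25; 26; 7; 15; 23], [:: (10, 8)]));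
  ((1, 8, 18), ([:: 7; 5; 25; 17; 9; 11; 19; 27; 1; 21; 13; 15; 23; 3; 4; 6; 14; 22; 2; 0; 20; 12; 10; 18; 26; 24; 16; 8], [:: (16, 8); (6, 2)]));
  ((2, 7, 18), ([:: 0; 2; 3; 11; 19; 27; 1; 21; 13; 5; 7; 15; 23; 25; 17; 9; 10; 18; 26; 24; 16; 8; 6; 14; 22; 20; 12; 4], [:: (14, 8); (3, 1)]));
  ((3, 6, 18), ([:: 7; 15; 17; 9; 11; 19; 27; 1; 21; 13; 5; 6; 14; 22; 2; 0; 20; 12; 4; 3; 23; 25; 26; 18; 10; 8; 16; 24], [:: (14, 8); (4, 1)]));
  ((4, 5, 18), ([:: 14; 6; 5; 13; 12; 4; 24; 26; 25; 27; 7; 15; 17; 9; 1; 21; 23; 3; 11; 19; 20; 0; 8; 16; 18; 10; 2; 22], [:: (20, 1); (11, 8)]));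
  ((5, 4, 18), ([:: 23; 22; 21; 13; 5; 25; 24; 16; 8; 0; 2; 10; 18; 20; 12; 4; 3; 11; 19; 17; 9; 1; 27; 7; 15; 14; 6; 26], [:: (25, 1); (11, 8)]));
  ((6, 3, 18), ([:: 3; 2; 10; 18; 26; 27; 19; 11; 13; 21; 23; 15; 7; 8; 16; 24; 22; 14; 6; 5; 4; 12; 20; 0; 1; 9; 17; 25], [:: (15, 8); (1, 1)]));
  ((7, 2, 18), ([:: 22; 14; 6; 5; 3; 23; 15; 7; 8; 16; 24; 4; 2; 1; 21; 13; 12; 20; 0; 27; 19; 11; 10; 18; 26; 25; 17; 9], [:: (19, 8); (6, 1)]));
  ((8, 1, 18), ([:: 27; 26; 18; 10; 2; 1; 0; 20; 12; 4; 3; 11; 19; 21; 13; 5; 6; 14; 22; 23; 15; 7; 8; 16; 24; 25; 17; 9], [:: (14, 8); (1, 1)]));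
  ((1, 9, 18), ([:: 5; 7; 15; 23; 2; 4; 6; 8; 16; 24; 3; 1; 22; 14; 12; 20; 28; 26; 18; 10; 9; 17; 25; 27; 19; 11; 13; 21; 0], [:: (16, 8); (7, 2)]));
  ((2, 8, 18), ([:: 9; 1; 28; 7; 15; 17; 19; 11; 3; 24; 22; 21; 13; 5; 26; 27; 6; 14; 16; 8; 0; 2; 10; 18; 20; 12; 4; 25; 23], [:: (24, 2); (22, 1); (9, 8)]));
  ((3, 7, 18), ([:: 7; 15; 14; 6; 5; 13; 21; 22; 1; 3; 24; 26; 28; 20; 12; 4; 25; 23; 2; 10; 18; 16; 8; 0; 27; 19; 11; 9; 17], [:: (13, 8)]));
  ((4, 6, 18), ([:: 27; 28; 20; 21; 22; 1; 9; 17; 19; 11; 3; 5; 13; 15; 7; 6; 14; 12; 4; 25; 23; 2; 10; 18; 26; 24; 16; 8; 0], [:: (8, 8)]));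
  ((5, 5, 18), ([:: 26; 18; 10; 9; 17; 16; 8; 6; 14; 15; 7; 5; 13; 21; 0; 28; 1; 22; 20; 12; 4; 25; 27; 19; 11; 3; 24; 23; 2], [:: (11, 8)]));
  ((6, 4, 18), ([:: 12; 4; 5; 13; 15; 7; 9; 17; 25; 26; 28; 27; 6; 14; 22; 1; 3; 11; 19; 20; 21; 0; 8; 16; 24; 23; 2; 10; 18], [:: (11, 8)]));
  ((7, 3, 18), ([:: 5; 13; 14; 6; 8; 16; 15; 7; 9; 17; 18; 10; 2; 23; 24; 3; 11; 19; 27; 26; 25; 4; 12; 20; 28; 1; 22; 21; 0], [:: (10, 8)]));
  ((8, 2, 18), ([:: 28; 7; 15; 14; 6; 8; 16; 24; 25; 17; 9; 1; 22; 23; 2; 10; 18; 26; 27; 0; 21; 20; 19; 11; 3; 4; 12; 13; 5], [:: (9, 8)]));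
  ((9, 1, 18), ([:: 5; 7; 15; 16; 8; 0; 28; 20; 12; 13; 21; 22; 14; 6; 27; 19; 11; 10; 18; 26; 25; 4; 3; 24; 23; 2; 1; 9; 17], [:: (14, 8)]));
  ((2, 9, 18), ([:: 21; 20; 18; 16; 8; 0; 22; 24; 2; 10; 12; 4; 26; 28; 6; 14; 15; 7; 29; 27; 5; 13; 11; 3; 25; 23; 1; 9; 17; 19], [:: (21, 1); (18, 2); (9, 8)]))].

Fixpoint lookup_base (t : seq ((nat * nat * nat) * (seq nat * seq (nat * nat)))) key :=
  if t is (key', entry) :: t' then if key' == key then entry else lookup_base t' key
  else ([::], [::]).

(* Every admissible (a, b, c) is a base triple plus extra 1s, pairs of 2s and octets of 8s,
   each kind supplied by a cut of that kind in the base path (decompose_small/large). *)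
Definition threshold c := maxn 9 (16 - c).

Definition small_base a b c :=
  [&& 1 <= a, 1 <= b, a + b <= 6, 15 <= a + b + c, c <= 24,
      (4 %| a + b + c + 1) ==> (3 <= a + b) & ~~ (8 %| a + b + c + 1)].

Definition large_base a b c :=
  [&& 1 <= a, 1 <= b, 1 <= c, c <= 18, maxn 7 (15 - c) <= a + b,
      a + b <= threshold c + 2 & (a + b == threshold c + 2) ==> (a == 2)].

Definition base_region a b c := small_base a b c || large_base a b c.

Definition has_cut_kind a b c k :=
  if k == 8 then (17 <= c) || (7 <= a + b) && (11 <= c)
  else [&& 7 <= a + b, threshold c <= a + b &
    if k == 2 then (a <= 2) && (threshold c - 1 <= b)
    else (2 <= a) && ((a + b == threshold c) || (a == 2) && (threshold c - 1 <= b))].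

Definition cut_kinds a b c := [seq k <- [:: 8; 2; 1] | has_cut_kind a b c k].

Definition base_entry_ok a b c :=
  let: (h, cs) := lookup_base base_table (a, b, c) in
  let v := a + b + c + 1 in
  [&& perm_eq h (iota 0 v), perm_eq (path_lengths v h) (L128 a b c),
      all (fun c => is_cut 8 v h c.1 c.2) cs, separated_cuts cs &
      perm_eq (map snd cs) (cut_kinds a b c)].

Lemma base_table_ok :
  all (fun a => all (fun b => all (fun c => base_region a b c ==> base_entry_ok a b c)
    (iota 1 24)) (iota 1 16)) (iota 1 16).
Proof. by vm_compute. Qed.

Lemma base_entry_okP a b c : base_region a b c -> base_entry_ok a b c.
Proof.
move=> base; have [ha hb hc] : [/\ a \in iota 1 16, b \in iota 1 16 & c \in iota 1 24].
  rewrite !mem_iota; case/orP: base.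
    by case/and5P=> ? ? ? ? /andP[? _]; split; lia.
  by case/and5P=> ? ? ? ? /andP[_ /andP[]]; rewrite /threshold; split; lia.
by move: base_table_ok => /allP/(_ _ ha)/allP/(_ _ hb)/allP/(_ _ hc); rewrite base.
Qed.

Definition base_decomposition a b c a0 b0 c0 n1 n2 n8 :=
  [/\ base_region a0 b0 c0, a = a0 + n1, b = b0 + n2 * 2, c = c0 + n8 * 8 &
      [/\ 0 < n1 -> has_cut_kind a0 b0 c0 1, 0 < n2 -> has_cut_kind a0 b0 c0 2
        & 0 < n8 -> has_cut_kind a0 b0 c0 8]].

Lemma reduce_into_window m lo x : 0 < m ->
  exists x0 n, [/\ x = x0 + n * m, x0 < lo + m & (0 < n -> lo <= x0)].
Proof.
move=> m_gt0; case: (ltnP x (lo + m)) => hx; first by exists x, 0; split; rewrite ?addn0.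
exists (lo + (x - lo) %% m), ((x - lo) %/ m); split=> [||_]; last lia.
  by have := divn_eq (x - lo) m; lia.
by rewrite ltn_add2l ltn_pmod.
Qed.

Lemma decompose_small a b c : 1 <= a -> 1 <= b -> 15 <= a + b + c -> a + b <= 6 ->
  (4 %| a + b + c + 1 -> 3 <= a + b) -> ~~ (8 %| a + b + c + 1) ->
  exists c0 n8, base_decomposition a b c a b c0 0 0 n8.
Proof.
move=> ha hb hv hab h4 h8.
have [c0 [n8 [def_c c0_lt n8_pos]]] := reduce_into_window 17 c (isT : 0 < 8).
exists c0, n8; split; rewrite ?addn0 //; last by split=> //; rewrite /has_cut_kind /=; lia.
have same_dvd d : d %| 8 -> (d %| a + b + c + 1) = (d %| a + b + c0 + 1).
  have -> : a + b + c + 1 = a + b + c0 + 1 + n8 * 8 by lia.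
  by move=> d8; rewrite dvdn_addl // dvdn_mull.
apply/orP; left; move: h4 h8; rewrite !same_dvd // /small_base; lia.
Qed.

Lemma decompose_large a b c : 1 <= a -> 1 <= b -> 1 <= c -> 15 <= a + b + c -> 7 <= a + b ->
  exists a0 b0 c0 n1 n2 n8, base_decomposition a b c a0 b0 c0 n1 n2 n8.
Proof.
move=> ha hb hc hv hab.
have [c0 [n8 [def_c c0_lt n8_pos]]] := reduce_into_window 11 c (isT : 0 < 8).
set s := threshold c0; have s_def : s = maxn 9 (16 - c0) by [].
have has8 a0 b0 : 7 <= a0 + b0 -> 0 < n8 -> has_cut_kind a0 b0 c0 8.
  by rewrite /has_cut_kind /=; lia.
have base a0 b0 : 1 <= a0 -> 1 <= b0 -> 7 <= a0 + b0 -> 15 <= a0 + b0 + c0 -> a0 + b0 <= s + 2 ->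
    (a0 + b0 = s + 2 -> a0 = 2) -> base_region a0 b0 c0.
  by move=> *; apply/orP; right; rewrite /large_base -/s; lia.
case: (leqP (a + b) (s + 1)) => hab_s.
  exists a, b, c0, 0, 0, n8; split; rewrite ?addn0 //; first by apply: base; lia.
  by split=> // /has8; apply.
case: (leqP b (s - 2)) => hb_s.
  exists (s - b), b, c0, (a - (s - b)), 0, n8; split; rewrite ?addn0 //; try lia.
    by apply: base; lia.
  split=> //; last by apply: has8; lia.
  by rewrite /has_cut_kind /= -/s; lia.
have [b0 [n2 [def_b b0_lt n2_pos]]] := reduce_into_window (s - 1) b (isT : 0 < 2).
have [a0 [le_a0a a0_12 a0_2]] : exists a0, [/\ a0 <= a, 1 <= a0 <= 2 & 1 < a -> a0 = 2].
  by case: (eqVneq a 1) => [->|]; [exists 1 | exists 2]; split; lia.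
exists a0, b0, c0, (a - a0), n2, n8; split; try lia; first by apply: base; lia.
split; last by apply: has8; lia.
  by rewrite /has_cut_kind /= -/s; lia.
by rewrite /has_cut_kind /= -/s; lia.
Qed.

Lemma perm_L128D a0 b0 c0 a' b' c' :
  perm_eq (L128 (a0 + a') (b0 + b') (c0 + c'))
          (L128 a0 b0 c0 ++ nseq c' 8 ++ nseq b' 2 ++ nseq a' 1).
Proof.
apply/permP => P; rewrite /L128 !count_cat !count_nseq.
by case: (P 1); case: (P 2); case: (P 8) => /=; lia.
Qed.

Lemma path_from_base a b c a0 b0 c0 n1 n2 n8 :
  base_decomposition a b c a0 b0 c0 n1 n2 n8 ->
  exists h, ham_path (a + b + c + 1) h /\
    perm_eq (path_lengths (a + b + c + 1) h) (L128 a b c).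
Proof.
case=> /base_entry_okP; rewrite /base_entry_ok.
case: (lookup_base base_table (a0, b0, c0)) => h0 cs /and5P[hp0 lengths0 cuts sep kinds].
move=> -> -> -> [h1 h2 h8].
pose mult k := if k == 8 then n8 else if k == 2 then n2 else n1.
have mult0 k : ~~ has_cut_kind a0 b0 c0 k -> nseq (mult k * k) k = [::].
  rewrite /mult /has_cut_kind; case: eqP => [-> hn | _]; last case: eqP => [-> hn | _ hn].
  - by move: (contra h8 hn); rewrite -eqn0Ngt => /eqP ->.
  - by move: (contra h2 hn); rewrite -eqn0Ngt => /eqP ->.
  - by move: (contra h1 hn); rewrite -eqn0Ngt => /eqP ->.
have [h [hp lengths]] := expand_separated_cuts (fun c => mult c.2) hp0 cuts sep.
set added := flatten _ in hp lengths.
have e_added : perm_eq added (nseq (n8 * 8) 8 ++ nseq (n2 * 2) 2 ++ nseq (n1 * 1) 1).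
  rewrite /added (map_comp (fun k => nseq (mult k * k) k) snd).
  apply: perm_trans (perm_flatten (perm_map _ kinds)) _.
  by rewrite flatten_map_filter //= cats0.
have size_added : size added = n8 * 8 + n2 * 2 + n1.
  by rewrite (perm_size e_added) !size_cat !size_nseq; lia.
exists h; have -> : a0 + n1 + (b0 + n2 * 2) + (c0 + n8 * 8) + 1 = a0 + b0 + c0 + 1 + size added.
  by rewrite size_added; lia.
split=> //; apply: perm_trans lengths _; apply: perm_trans (perm_cat lengths0 e_added) _.
by rewrite perm_sym muln1 perm_L128D.
Qed.

Lemma exists_L128_path a b c : 1 <= a -> 1 <= b -> 1 <= c -> 15 <= a + b + c ->
  (4 %| a + b + c + 1 -> 3 <= a + b) -> (8 %| a + b + c + 1 -> 7 <= a + b) ->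
  exists h, ham_path (a + b + c + 1) h /\
    perm_eq (path_lengths (a + b + c + 1) h) (L128 a b c).
Proof.
move=> ha hb hc hv h4 h8; case: (leqP (a + b) 6) => hab.
  have not8 : ~~ (8 %| a + b + c + 1) by apply/negP => /h8; lia.
  have [c0 [n8 dec]] := decompose_small ha hb hv hab h4 not8.
  exact: path_from_base dec.
have [a0 [b0 [c0 [n1 [n2 [n8 dec]]]]]] := decompose_large ha hb hc hv hab.
exact: path_from_base dec.
Qed.

Theorem proposition5p3 (a b c : nat) :
  1 <= a -> 1 <= b -> 1 <= c -> 8 <= (a + b + c + 1)./2 ->
  (exists h : seq nat, ham_path (a + b + c + 1) h /\
      perm_eq (path_lengths (a + b + c + 1) h) (L128 a b c))
  <->
  (forall d : nat, d %| (a + b + c + 1) ->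
      count (fun x => d %| x) (L128 a b c) <= (a + b + c + 1) - d).
Proof.
move=> ha hb hc hv2; have hv : 15 <= a + b + c by move: hv2; rewrite -divn2; lia.
split => [[h [hp /permP lengths]] d dv | cond].
  by rewrite -lengths; apply: count_dvd_path_lengths.
by apply: exists_L128_path => // /cond; rewrite /L128 !count_cat !count_nseq /=; lia.
Qed.
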